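(* Let $0<q<1$, $\Re\eta>-1$, $\mu\ge0$, $\lambda\ge1$, and let $\phi(z)=1+\sum_{n\ge1}E_nz^n$ be analytic in $\Delta$ with $\Re\phi>0$, $\phi(0)=1$, $E_1>0$. Put $M_k=\mu-(\mu-1)\widetilde{[k]}_q$ and $N=\mu-(\mu-1)\widetilde{[2]}_q^{\,2}$, $$\Omega=2(\lambda\widetilde{[3]}_q-1)M_3L_3+\lambda\big(\lambda M_2^2-N\big)\widetilde{[2]}_q^{\,2}L_2^2,$$ $$\Theta=2(\lambda\widetilde{[3]}_q-1)M_3E_1^2L_3+\lambda\big\{\lambda M_2^2(E_1^2+2E_1-2E_2)-NE_1^2\big\}\widetilde{[2]}_q^{\,2}L_2^2,$$ and assume $M_2,M_3,\Omega,\Theta$ are nonzero. If $f(z)=z+\sum_{n\ge2}a_nz^n$ belongs to $\widetilde{\mathcal{S}^*_{\Sigma}}{}^{\eta}_q(\mu,\lambda;\phi)$, then $$|a_2|\le\min\left\{\frac{E_1}{\lambda|M_2L_2|\widetilde{[2]}_q},\ \sqrt{\frac{2(|E_2-E_1|+E_1)}{|\Omega|}},\ \frac{E_1\sqrt{2E_1}}{\sqrt{|\Theta|}}\right\}$$ and $$|a_3|\le\frac{E_1}{(\lambda\widetilde{[3]}_q-1)|M_3L_3|}+\min\left\{\frac{E_1^2}{\lambda^2M_2^2\widetilde{[2]}_q^{\,2}|L_2|^2},\ \frac{2(|E_2-E_1|+E_1)}{|\Omega|}\right\}.$$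
   Context: $\Delta=\{z\in\mathbb{C}:|z|<1\}$. $\Sigma$ denotes the class of analytic $f(z)=z+\sum_{n\ge2}a_nz^n$ on $\Delta$ that are univalent and whose inverse $g=f^{-1}$ (with $g(w)=w-a_2w^2+(2a_2^2-a_3)w^3-\cdots$) extends univalently to $\Delta$. For $0<q<1$ and $\chi\in\mathbb{C}$, $\widetilde{[\chi]}_q=\frac{q^{\chi}-q^{-\chi}}{q-q^{-1}}$ (for $n\in\mathbb N$, $\widetilde{[n]}_q=\sum_{k=0}^{n-1}q^{n-1-2k}$). The symmetric $q$-derivative: $\widetilde{\mathcal D}_qF(z)=\frac{F(qz)-F(q^{-1}z)}{(q-q^{-1})z}$ ($z\neq0$), $\widetilde{\mathcal D}_qF(0)=F'(0)$. For $\Re\eta>-1$, the generalized Bernardi operator acts on $f=z+\sum_{n\ge2}a_nz^n$ by $\mathcal J^{\eta}_qf(z)=z+\sum_{n\ge2}L_na_nz^n$, where $L_n=\widetilde{[1+\eta]}_q/\widetilde{[n+\eta]}_q$. Subordination $F\prec G$ means $F=G\circ h$ with $h$ analytic on $\Delta$, $h(0)=0$, $|h|<1$. Non-integer powers are principal branches equal to $1$ at the origin. The class $\widetilde{\mathcal{S}^*_{\Sigma}}{}^{\eta}_q(\mu,\lambda;\phi)$ ($\mu\ge0$, $\lambda\ge1$) consists of $f\in\Sigma$, $g=f^{-1}$, such that, writing $F=\mathcal J^\eta_qf$ and $G=\mathcal J^\eta_qg$, $$\left\{\frac{2z[\widetilde{\mathcal D}_qF(z)]^{\lambda}}{F(z)-F(-z)}\right\}^{\mu}\left\{\frac{2\{\widetilde{\mathcal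 D}_q[z\widetilde{\mathcal D}_qF(z)]\}^{\lambda}}{\widetilde{\mathcal D}_q[F(z)-F(-z)]}\right\}^{1-\mu}\prec\phi(z)$$ and the same expression with $F,z$ replaced by $G,w$ is subordinate to $\phi(w)$, for $z,w\in\Delta$. *)

From Stdlib Require Import Reals.
From Coquelicot Require Import Coquelicot.

Set Implicit Arguments.
Local Open Scope C_scope.

Definition Cexp (z : C) : C :=
  (exp (Re z) * cos (Im z), exp (Re z) * sin (Im z))%R.

Definition qpowC (q : R) (chi : C) : C := Cexp (chi * RtoC (ln q)).

Definition qbr (q : R) (chi : C) : C :=
  (qpowC q chi - qpowC q (- chi)) / RtoC (q - / q)%R.

Definition qnat (q : R) (n : nat) : R := ((q ^ n - / q ^ n) / (q - / q))%R.

Definition Lq (q : R) (eta : C) (n : nat) : C :=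
  qbr q (1 + eta) / qbr q (RtoC (INR n) + eta).

Definition ps := nat -> C.

Definition psone : ps := fun n => match n with O => 1 | _ => 0 end.
Definition psadd (A B : ps) : ps := fun n => A n + B n.
Definition pssub (A B : ps) : ps := fun n => A n - B n.
Definition pscale (c : C) (A : ps) : ps := fun n => c * A n.
Definition psmul (A B : ps) : ps :=
  fun n => sum_n (fun k => A k * B (n - k)%nat) n.
Fixpoint psnpow (A : ps) (k : nat) : ps :=
  match k with O => psone | S k' => psmul A (psnpow A k') end.
Definition psmulz (A : ps) : ps :=
  fun n => match n with O => 0 | S m => A m end.
(** division by z (meaningful when A 0 = 0) *)
Definition psdivz (A : ps) : ps := fun n => A (S n).
Definition psdil (c : C) (A : ps) : ps := fun n => Cpow c n * A n.
(** composition phi(h(z)) (meaningful when h 0%nat = 0) *)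
Definition pscomp (phi h : ps) : ps :=
  fun n => sum_n (fun k => phi k * psnpow h k n) n.

Fixpoint gbinom (r : R) (k : nat) : R :=
  match k with
  | O => 1%R
  | S k' => (gbinom r k' * (r - INR k') / INR (S k'))%R
  end.

(** P^r for a series with P 0 = 1: principal branch (value 1 at the origin),
    i.e. the binomial series sum_k binom(r,k) (P - 1)^k. *)
Definition pspow (P : ps) (r : R) : ps :=
  fun n => sum_n (fun k => RtoC (gbinom r k) * psnpow (pssub P psone) k n) n.

(** 1/Y for Y 0 <> 0, and X / Y *)
Definition psinv (Y : ps) : ps :=
  pscale (/ Y 0%nat) (pspow (pscale (/ Y 0%nat) Y) (-1)).
Definition psdiv (X Y : ps) : ps := psmul X (psinv Y).

(** symmetric q-derivative:
    (F(qz) - F(q^{-1} z)) / ((q - q^{-1}) z) *)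
Definition psDq (q : R) (F : ps) : ps :=
  pscale (/ RtoC (q - / q)%R)
    (psdivz (pssub (psdil (RtoC q) F) (psdil (RtoC (/ q)) F))).

Definition Jq (q : R) (eta : C) (a : ps) : ps :=
  fun n => match n with O | S O => a n | _ => Lq q eta n * a n end.

(** The series of
  {2z[D_q F]^lam/(F(z)-F(-z))}^mu {2{D_q[z D_q F]}^lam / D_q[F(z)-F(-z)]}^(1-mu) *)
Definition ratio1 (q lam : R) (F : ps) : ps :=
  psdiv (psdivz (psmulz (pscale 2 (pspow (psDq q F) lam))))
        (psdivz (pssub F (psdil (-1) F))).
Definition ratio2 (q lam : R) (F : ps) : ps :=
  psdiv (pscale 2 (pspow (psDq q (psmulz (psDq q F))) lam))
        (psDq q (pssub F (psdil (-1) F))).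
Definition Sexpr (q mu lam : R) (F : ps) : ps :=
  psmul (pspow (ratio1 q lam F) mu) (pspow (ratio2 q lam F) (1 - mu)).

Definition inDisk (z : C) : Prop := (Cmod z < 1)%R.

Definition analytic_disk (a : ps) : Prop := forall z, inDisk z -> ex_pseries a z.

Definition univalent_disk (a : ps) : Prop :=
  analytic_disk a /\
  forall z w v, inDisk z -> inDisk w -> is_pseries a z v -> is_pseries a w v -> z = w.

(** Subordination P < phi: P = phi o h with h analytic on the disk,
    h(0)=0, |h|<1 (as identity of power series at 0, equivalently on Delta). *)
Definition subord (P phi : ps) : Prop :=
  exists h : ps, analytic_disk h /\ h 0%nat = 0 /\
    (forall z v, inDisk z -> is_pseries h z v -> inDisk v) /\
    forall n, P n = pscomp phi h n.

(** g (coefficients b) is the inverse of f (coefficients a) near 0 and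
    extends univalently to the disk. *)
Definition inverse_ext (a b : ps) : Prop :=
  univalent_disk b /\
  exists r : R, (0 < r)%R /\
    forall w v, (Cmod w < r)%R -> is_pseries b w v ->
      inDisk v /\ is_pseries a v w.

Definition in_Sigma (a b : ps) : Prop :=
  a 0%nat = 0 /\ a 1%nat = 1 /\ univalent_disk a /\ inverse_ext a b.

Definition in_class (q : R) (eta : C) (mu lam : R) (E : ps) (a : ps) : Prop :=
  exists b : ps, in_Sigma a b /\
    subord (Sexpr q mu lam (Jq q eta a)) E /\
    subord (Sexpr q mu lam (Jq q eta b)) E.

(* Write g = f^-1.  Near 0, f (g w) = w forces g = w - a2 w^2 + (2 a2^2 - a3) w^3 + ... .
   Subordination provides Schur functions h, k (analytic, h 0 = 0, |h| < 1) with
   S(F) = phi o h and S(G) = phi o k, F and G being the Bernardi transforms of f and g.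
   Comparing the coefficients of z and z^2 ties a2 and a3 to the first two coefficients of
   h and k; the sum of the two z^2 identities isolates Omega a2^2 (and, using the z identity,
   Theta a2^2), their difference isolates a3 - a2^2.  The Schur bounds |h1| <= 1 and
   |h2| <= 1 - |h1|^2, obtained from a discrete Parseval identity on circles applied to
   h(z) (1 + b z), then give all the estimates. *)

From Stdlib Require Import Reals Lra Lia Arith.
From Coquelicot Require Import Coquelicot.
Local Open Scope C_scope.

(** * q-numbers *)

Lemma Rinv_gt_1 (q : R) : (0 < q < 1)%R -> (1 < / q)%R.
Proof. intros Hq. rewrite <- Rinv_1. apply Rinv_lt_contravar; lra. Qed.

Lemma qnat_1 (q : R) : (0 < q < 1)%R -> qnat q 1 = 1%R.
Proof.
  intros Hq. unfold qnat. assert (H := Rinv_gt_1 q Hq). simpl.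
  field. split; [lra|]. nra.
Qed.

Lemma qnat_2 (q : R) : (0 < q < 1)%R -> qnat q 2 = (q + / q)%R.
Proof.
  intros Hq. unfold qnat. assert (H := Rinv_gt_1 q Hq).
  field. split; [lra|]. simpl. nra.
Qed.

Lemma qnat_3 (q : R) : (0 < q < 1)%R -> qnat q 3 = (q * q + 1 + / (q * q))%R.
Proof.
  intros Hq. unfold qnat. assert (q * q < 1)%R by nra.
  field. split; [lra|]. simpl. nra.
Qed.

Lemma qnat_2_pos (q : R) : (0 < q < 1)%R -> (0 < qnat q 2)%R.
Proof. intros Hq. rewrite qnat_2 by exact Hq. assert (H := Rinv_gt_1 q Hq). lra. Qed.

Lemma qnat_3_gt_1 (q : R) : (0 < q < 1)%R -> (1 < qnat q 3)%R.
Proof.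
  intros Hq. rewrite qnat_3 by exact Hq.
  assert (0 < / (q * q))%R by (apply Rinv_0_lt_compat; nra). nra.
Qed.

Lemma Cmod_Cexp (z : C) : Cmod (Cexp z) = exp (Re z).
Proof.
  unfold Cexp, Cmod. cbn [fst snd]. assert (H := sin2_cos2 (Im z)). unfold Rsqr in H.
  replace ((exp (Re z) * cos (Im z)) ^ 2 + (exp (Re z) * sin (Im z)) ^ 2)%R
    with (exp (Re z) ^ 2)%R by (simpl; nra).
  apply sqrt_pow2, Rlt_le, exp_pos.
Qed.

Lemma Cmult_integral (u v : C) : u * v = 0 -> u = 0 \/ v = 0.
Proof.
  intros H. destruct (Ceq_dec u 0) as [Hu|Hu]; auto. right.
  replace v with (/ u * (u * v)) by (field; exact Hu). rewrite H. ring.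
Qed.

Lemma Cdiv_neq_0 (u v : C) : u <> 0 -> v <> 0 -> u / v <> 0.
Proof.
  intros Hu Hv H. apply Cmult_integral in H as [H|H]; [exact (Hu H)|].
  apply C1_nz. rewrite <- (Cinv_r v Hv), H. ring.
Qed.

(* |q^chi| = q^(Re chi) < 1 < |q^(-chi)| when Re chi > 0 *)
Lemma qbr_neq_0 (q : R) (chi : C) : (0 < q < 1)%R -> (0 < Re chi)%R -> qbr q chi <> 0.
Proof.
  intros Hq Hchi. unfold qbr, qpowC.
  assert (Hl : (ln q < 0)%R) by (rewrite <- ln_1; apply ln_increasing; lra).
  assert (Hd : RtoC (q - / q) <> 0).
  { assert (H := Rinv_gt_1 q Hq). intro E. apply RtoC_inj in E. lra. }
  apply Cdiv_neq_0; [|exact Hd]. intro H.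
  assert (E : Cmod (Cexp (chi * RtoC (ln q))) = Cmod (Cexp (- chi * RtoC (ln q)))).
  { f_equal. rewrite <- (Cplus_0_l (Cexp (- chi * RtoC (ln q)))), <- H. ring. }
  rewrite !Cmod_Cexp in E. apply exp_inv in E.
  unfold Re in *. simpl in E. nra.
Qed.

Lemma Lq_neq_0 (q : R) (eta : C) (n : nat) : (0 < q < 1)%R -> (-1 < Re eta)%R ->
  (1 <= n)%nat -> Lq q eta n <> 0.
Proof.
  intros Hq Heta Hn. assert (1 <= INR n)%R by (apply (le_INR 1); exact Hn).
  unfold Lq. apply Cdiv_neq_0; apply qbr_neq_0; try exact Hq; unfold Re in *; simpl; lra.
Qed.

(** * Low-order coefficients of the series operations *)

Lemma sum_n_C_1 (f : nat -> C) : sum_n f 1 = f 0%nat + f 1%nat.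
Proof. rewrite sum_Sn, sum_O. reflexivity. Qed.

Lemma sum_n_C_2 (f : nat -> C) : sum_n f 2 = f 0%nat + f 1%nat + f 2%nat.
Proof. rewrite !sum_Sn, sum_O. reflexivity. Qed.

Lemma psmul_0 (A B : ps) : psmul A B 0%nat = A 0%nat * B 0%nat.
Proof. unfold psmul. rewrite sum_O. reflexivity. Qed.

Lemma psmul_1 (A B : ps) : psmul A B 1%nat = A 0%nat * B 1%nat + A 1%nat * B 0%nat.
Proof. unfold psmul. rewrite sum_n_C_1. reflexivity. Qed.

Lemma psmul_2 (A B : ps) :
  psmul A B 2%nat = A 0%nat * B 2%nat + A 1%nat * B 1%nat + A 2%nat * B 0%nat.
Proof. unfold psmul. rewrite sum_n_C_2. reflexivity. Qed.

Lemma pspow_low_coefs (P : ps) (r : R) : P 0%nat = 1 ->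
  pspow P r 0%nat = 1 /\ pspow P r 1%nat = RtoC r * P 1%nat /\
  pspow P r 2%nat = RtoC r * P 2%nat + RtoC (r * (r - 1) / 2) * P 1%nat ^ 2.
Proof.
  intros HP0.
  assert (G1 : gbinom r 1 = r) by (simpl; field).
  assert (G2 : gbinom r 2 = (r * (r - 1) / 2)%R) by (simpl; field).
  unfold pspow. rewrite sum_O, sum_n_C_1, sum_n_C_2, G1, G2.
  unfold psnpow, pssub. rewrite ?psmul_0, ?psmul_1, ?psmul_2. unfold psone. cbn.
  rewrite HP0. repeat split; ring.
Qed.

Lemma psinv_low_coefs (Y : ps) : Y 0%nat <> 0 ->
  psinv Y 0%nat = / Y 0%nat /\ psinv Y 1%nat = - Y 1%nat / Y 0%nat ^ 2 /\
  psinv Y 2%nat = Y 1%nat ^ 2 / Y 0%nat ^ 3 - Y 2%nat / Y 0%nat ^ 2.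
Proof.
  intros HY0.
  destruct (pspow_low_coefs (pscale (/ Y 0%nat) Y) (-1)) as [P0 [P1 P2]].
  { unfold pscale. field. exact HY0. }
  unfold psinv. unfold pscale at 1 3 5. rewrite P0, P1, P2. unfold pscale.
  replace (RtoC (-1 * (-1 - 1) / 2)) with (RtoC 1) by (f_equal; field).
  replace (RtoC (-1)) with (- (1)) by (apply injective_projections; simpl; lra).
  repeat split; field; exact HY0.
Qed.

Lemma psdiv_low_coefs (X Y : ps) : Y 0%nat <> 0 ->
  psdiv X Y 0%nat = X 0%nat / Y 0%nat /\
  psdiv X Y 1%nat = X 1%nat / Y 0%nat - X 0%nat * Y 1%nat / Y 0%nat ^ 2 /\
  psdiv X Y 2%nat = X 2%nat / Y 0%nat - X 1%nat * Y 1%nat / Y 0%nat ^ 2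
     + X 0%nat * (Y 1%nat ^ 2 / Y 0%nat ^ 3 - Y 2%nat / Y 0%nat ^ 2).
Proof.
  intros HY0. destruct (psinv_low_coefs Y HY0) as [I0 [I1 I2]]. unfold psdiv.
  rewrite psmul_0, psmul_1, psmul_2, I0, I1, I2.
  repeat split; field; exact HY0.
Qed.

Lemma psDq_coef (q : R) (F : ps) (n : nat) : (0 < q < 1)%R ->
  psDq q F n = RtoC (qnat q (S n)) * F (S n).
Proof.
  intros Hq. unfold psDq, pscale, psdivz, pssub, psdil, qnat.
  assert (Hd : (q - / q <> 0)%R) by (assert (H := Rinv_gt_1 q Hq); lra).
  assert (Hd' : RtoC (q - / q) <> 0) by (intro E; apply Hd, RtoC_inj, E).
  rewrite <- !RtoC_pow, pow_inv, RtoC_div by exact Hd.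
  rewrite !RtoC_minus in *. field. exact Hd'.
Qed.

Section LowOrderCoefficients.
Variables (q mu lam : R) (F : ps).
Hypothesis Hq : (0 < q < 1)%R.
Hypothesis HF1 : F 1%nat = 1.
Let x := RtoC (qnat q 2).
Let y := RtoC (qnat q 3).

Lemma ratio1_low_coefs :
  ratio1 q lam F 0%nat = 1 /\ ratio1 q lam F 1%nat = RtoC lam * x * F 2%nat /\
  ratio1 q lam F 2%nat = (RtoC lam * y - 1) * F 3%nat
     + RtoC lam * (RtoC lam - 1) / 2 * x ^ 2 * F 2%nat ^ 2.
Proof.
  destruct (pspow_low_coefs (psDq q F) lam) as [P0 [P1 P2]].
  { rewrite psDq_coef, qnat_1, HF1 by exact Hq. simpl. ring. }
  unfold ratio1.
  destruct (psdiv_low_coefs (psdivz (psmulz (pscale 2 (pspow (psDq q F) lam))))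
     (psdivz (pssub F (psdil (-1) F)))) as [D0 [D1 D2]].
  { unfold psdivz, pssub, psdil. simpl. rewrite HF1.
    intro E. apply (f_equal fst) in E. simpl in E. lra. }
  rewrite D0, D1, D2. unfold psdivz, psmulz, pscale, pssub, psdil. simpl.
  rewrite P0, P1, P2, !psDq_coef, ?qnat_1, ?HF1 by exact Hq.
  rewrite RtoC_div by lra. rewrite RtoC_mult, RtoC_minus.
  fold x y. repeat split; field.
Qed.

Lemma ratio2_low_coefs :
  ratio2 q lam F 0%nat = 1 /\ ratio2 q lam F 1%nat = RtoC lam * x ^ 2 * F 2%nat /\
  ratio2 q lam F 2%nat = (RtoC lam * y ^ 2 - y) * F 3%nat
     + RtoC lam * (RtoC lam - 1) / 2 * x ^ 4 * F 2%nat ^ 2.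
Proof.
  destruct (pspow_low_coefs (psDq q (psmulz (psDq q F))) lam) as [P0 [P1 P2]].
  { rewrite psDq_coef by exact Hq. unfold psmulz.
    rewrite psDq_coef, qnat_1, HF1 by exact Hq. simpl. ring. }
  unfold ratio2.
  destruct (psdiv_low_coefs (pscale 2 (pspow (psDq q (psmulz (psDq q F))) lam))
     (psDq q (pssub F (psdil (-1) F)))) as [D0 [D1 D2]].
  { rewrite psDq_coef, qnat_1 by exact Hq. unfold pssub, psdil. simpl. rewrite HF1.
    intro E. apply (f_equal fst) in E. simpl in E. lra. }
  rewrite D0, D1, D2. unfold pscale.
  rewrite P0, P1, P2, !psDq_coef by exact Hq. unfold psmulz, pssub, psdil.
  rewrite !psDq_coef, ?qnat_1, ?HF1 by exact Hq. simpl.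
  rewrite RtoC_div by lra. rewrite RtoC_mult, RtoC_minus.
  fold x y. repeat split; field.
Qed.

Lemma Sexpr_low_coefs :
  let M2 := (mu - (mu - 1) * qnat q 2)%R in
  let M3 := (mu - (mu - 1) * qnat q 3)%R in
  let N := (mu - (mu - 1) * qnat q 2 ^ 2)%R in
  Sexpr q mu lam F 1%nat = RtoC (lam * qnat q 2 * M2) * F 2%nat /\
  Sexpr q mu lam F 2%nat = RtoC ((lam * qnat q 3 - 1) * M3) * F 3%nat
     + RtoC (lam * qnat q 2 ^ 2 * (lam * M2 ^ 2 - N) / 2) * F 2%nat ^ 2.
Proof.
  intros M2 M3 N.
  destruct ratio1_low_coefs as [A0 [A1 A2]]. destruct ratio2_low_coefs as [B0 [B1 B2]].
  destruct (pspow_low_coefs _ mu A0) as [C0 [C1 C2]].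
  destruct (pspow_low_coefs _ (1 - mu) B0) as [E0 [E1 E2]].
  unfold Sexpr. rewrite psmul_1, psmul_2, C0, C1, C2, E0, E1, E2, A1, A2, B1, B2.
  unfold M2, M3, N, x, y.
  rewrite !RtoC_div by lra.
  repeat rewrite ?RtoC_mult, ?RtoC_minus, ?RtoC_pow.
  split; field.
Qed.

End LowOrderCoefficients.

Lemma pscomp_low_coefs (phi h : ps) : h 0%nat = 0 ->
  pscomp phi h 1%nat = phi 1%nat * h 1%nat /\
  pscomp phi h 2%nat = phi 1%nat * h 2%nat + phi 2%nat * h 1%nat ^ 2.
Proof.
  intros H0. unfold pscomp. rewrite sum_n_C_1, sum_n_C_2. unfold psnpow.
  repeat rewrite ?psmul_0, ?psmul_1, ?psmul_2. unfold psone. rewrite H0. split; ring.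
Qed.

(** * Power series on the unit disk *)

Definition partial_sum (c : ps) (z : C) (N : nat) : C := sum_n (fun k => z ^ k * c k) N.

Lemma Cmod_minus_sym (u v : C) : Cmod (u - v) = Cmod (v - u).
Proof. replace (u - v) with (- (v - u)) by ring. apply Cmod_opp. Qed.

Lemma Cmod_triangle3 (u v w : C) : (Cmod (u + v + w) <= Cmod u + Cmod v + Cmod w)%R.
Proof. eapply Rle_trans; [apply Cmod_triangle|]. assert (H := Cmod_triangle u v). lra. Qed.

Lemma Cmod_le_plus (u v : C) : (Cmod u <= Cmod (u + v) + Cmod v)%R.
Proof.
  assert (H := Cmod_triangle (u + v) (- v)). replace (u + v + - v) with u in H by ring.
  rewrite Cmod_opp in H. exact H.
Qed.

Lemma Cmod_lim_minus_le (s : nat -> C) (v c : C) (M : R) (N : nat) :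
  filterlim s eventually (locally v) ->
  (forall n, (N <= n)%nat -> Cmod (s n - c) <= M)%R -> (Cmod (v - c) <= M)%R.
Proof.
  intros Hlim Hs. apply Rnot_lt_le. intro H.
  assert (Hs2 : (0 < sqrt 2)%R) by (apply sqrt_lt_R0; lra).
  assert (He : (0 < (Cmod (v - c) - M) / (2 * sqrt 2))%R) by (apply Rdiv_lt_0_compat; lra).
  destruct (proj1 (filterlim_locally s v) Hlim (mkposreal _ He)) as [N' HN'].
  specialize (HN' (max N N') ltac:(lia)). specialize (Hs (max N N') ltac:(lia)).
  apply C_NormedModule_mixin_compat2 in HN'. simpl in HN'.
  change (minus (s (max N N')) v) with (s (max N N') - v) in HN'.
  assert (T := Cmod_triangle (v - s (max N N')) (s (max N N') - c)).
  replace (v - s (max N N') + (s (max N N') - c)) with (v - c) in T by ring.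
  rewrite (Cmod_minus_sym v (s _)) in T.
  replace (sqrt 2 * ((Cmod (v - c) - M) / (2 * sqrt 2)))%R
    with ((Cmod (v - c) - M) / 2)%R in HN' by (field; lra).
  lra.
Qed.

Lemma sum_n_m_geom (t : R) (a m : nat) : (0 <= t < 1)%R -> (a <= S m)%nat ->
  sum_n_m (fun k => t ^ k)%R a m = ((t ^ a - t ^ (S m)) / (1 - t))%R.
Proof.
  intros Ht. change (@eq R_AbelianMonoid) with (@eq R).
  induction m; intros Ha.
  - destruct a as [|[|a]]; [ | | lia].
    + rewrite sum_n_n. simpl. field. lra.
    + rewrite sum_n_m_zero by lia. simpl. change (@zero R_AbelianMonoid) with 0%R. field. lra.
  - destruct (Nat.eq_dec a (S (S m))) as [->|Hne].
    + rewrite sum_n_m_zero by lia. change (@zero R_AbelianMonoid) with 0%R. field. lra.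
    + rewrite sum_n_Sm, IHm by lia. change (plus ?u ?v) with (u + v)%R. simpl. field. lra.
Qed.

Lemma sum_n_m_geom_le (t : R) (a m : nat) : (0 <= t < 1)%R ->
  (sum_n_m (fun k => t ^ k)%R a m <= t ^ a / (1 - t))%R.
Proof.
  intros Ht. destruct (le_lt_dec a (S m)).
  - rewrite sum_n_m_geom by assumption. unfold Rdiv. apply Rmult_le_compat_r.
    + apply Rlt_le, Rinv_0_lt_compat. lra.
    + assert (0 <= t ^ S m)%R by (apply pow_le; lra). lra.
  - rewrite sum_n_m_zero by lia. change (@zero R_AbelianMonoid) with 0%R.
    apply Rdiv_le_0_compat; [apply pow_le|]; lra.
Qed.

Lemma pseries_terms_bounded (c : ps) (z : C) : ex_pseries c z ->
  exists B, forall n, (Cmod (c n) * Cmod z ^ n <= B)%R.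
Proof.
  intros [l Hl].
  destruct (filterlim_bounded (sum_n (fun k => scal (pow_n z k) (c k)))) as [M HM].
  { exists l. exact Hl. }
  change (forall n, Cmod (partial_sum c z n) <= M)%R in HM.
  exists (2 * M)%R. intros n.
  assert (HM0 : (0 <= M)%R) by (eapply Rle_trans; [apply Cmod_ge_0|apply (HM 0%nat)]).
  replace (Cmod (c n) * Cmod z ^ n)%R with (Cmod (z ^ n * c n))
    by (rewrite Cmod_mult, Cmod_pow; ring).
  destruct n as [|n].
  - specialize (HM 0%nat). unfold partial_sum in HM. rewrite sum_O in HM. lra.
  - assert (HSn := HM (S n)). specialize (HM n). unfold partial_sum in *.
    rewrite sum_Sn in HSn. change plus with Cplus in HSn.
    assert (T := Cmod_le_plus (z ^ S n * c (S n)) (sum_n (fun k => z ^ k * c k) n)).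
    rewrite Cplus_comm in T. lra.
Qed.

Lemma analytic_disk_coef_bound (c : ps) (rho : R) : analytic_disk c -> (0 <= rho < 1)%R ->
  exists B, forall n, (Cmod (c n) * rho ^ n <= B)%R.
Proof.
  intros Hc Hrho. destruct (pseries_terms_bounded c (RtoC rho)) as [B HB].
  { apply Hc. unfold inDisk. rewrite Cmod_R, Rabs_pos_eq; lra. }
  exists B. intros n. specialize (HB n). rewrite Cmod_R, Rabs_pos_eq in HB by lra. exact HB.
Qed.

Lemma pseries_tail_bound (c : ps) (z v : C) (rho r B : R) (N : nat) :
  (0 < rho)%R -> (0 <= r < rho)%R -> (Cmod z <= r)%R ->
  (forall n, Cmod (c n) * rho ^ n <= B)%R -> is_pseries c z v ->
  (Cmod (v - partial_sum c z N) <= B * (r / rho) ^ (S N) / (1 - r / rho))%R.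
Proof.
  intros Hrho Hr Hz HB Hv.
  assert (Ht : (0 <= r / rho < 1)%R).
  { split; [apply Rdiv_le_0_compat; lra|].
    apply Rmult_lt_reg_r with rho; [exact Hrho|].
    unfold Rdiv. rewrite Rmult_assoc, Rinv_l by lra. lra. }
  assert (HB0 : (0 <= B)%R).
  { specialize (HB 0%nat). simpl in HB. assert (T := Cmod_ge_0 (c 0%nat)). lra. }
  apply (Cmod_lim_minus_le _ _ _ _ N Hv). intros n Hn.
  change (Cmod (partial_sum c z n - partial_sum c z N) <= B * (r / rho) ^ S N / (1 - r / rho))%R.
  replace (partial_sum c z n - partial_sum c z N) with (sum_n_m (fun k => z ^ k * c k) (S N) n)
    by (unfold partial_sum; apply (sum_n_m_sum_n (fun k => z ^ k * c k) N n Hn)).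
  eapply Rle_trans. exact (norm_sum_n_m (V:=C_NormedModule) (fun k => z ^ k * c k) (S N) n).
  eapply Rle_trans. apply sum_n_m_le with (b := fun k => (B * (r / rho) ^ k)%R).
  { intros k. change (norm (z ^ k * c k)) with (Cmod (z ^ k * c k)).
    rewrite Cmod_mult, Cmod_pow.
    assert (Hp : (0 < rho ^ k)%R) by (apply pow_lt; exact Hrho).
    replace (B * (r / rho) ^ k)%R with (B * r ^ k / rho ^ k)%R
      by (unfold Rdiv; rewrite Rpow_mult_distr, pow_inv; ring).
    apply Rle_trans with (Cmod (c k) * r ^ k)%R.
    { rewrite Rmult_comm. apply Rmult_le_compat_l; [apply Cmod_ge_0|].
      apply pow_incr. split; [apply Cmod_ge_0|exact Hz]. }
    apply Rmult_le_reg_r with (rho ^ k)%R; [exact Hp|].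
    replace (B * r ^ k / rho ^ k * rho ^ k)%R with (B * r ^ k)%R by (field; lra).
    replace (Cmod (c k) * r ^ k * rho ^ k)%R with (Cmod (c k) * rho ^ k * r ^ k)%R by ring.
    apply Rmult_le_compat_r; [apply pow_le; lra | apply HB]. }
  rewrite (sum_n_m_mult_l (K:=R_Ring) B (fun k => (r / rho) ^ k)%R).
  change (mult B ?u) with (B * u)%R.
  unfold Rdiv at 2. rewrite Rmult_assoc. apply Rmult_le_compat_l; [exact HB0|].
  apply sum_n_m_geom_le. exact Ht.
Qed.

Lemma is_pseries_at_0 (c : ps) (v : C) : analytic_disk c -> is_pseries c (RtoC 0) v -> v = c 0%nat.
Proof.
  intros Hc Hv. destruct (analytic_disk_coef_bound c (1/2) Hc) as [B HB]; [lra|].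
  assert (T := pseries_tail_bound c (RtoC 0) v (1/2) 0 B 0 ltac:(lra) ltac:(lra)
    ltac:(rewrite Cmod_0; lra) HB Hv).
  rewrite Rdiv_0_l, pow_ne_zero, Rmult_0_r, Rdiv_0_l in T by lia.
  unfold partial_sum in T. rewrite sum_O, Cmult_1_l in T.
  assert (E : v - c 0%nat = 0) by (apply Cmod_eq_0, Rle_antisym; [exact T | apply Cmod_ge_0]).
  rewrite <- (Cplus_0_l (c 0%nat)), <- E. ring.
Qed.

(** * Finite sums and roots of unity *)

(* Structurally recursive finite sums: unlike [sum_n] they unfold by [simpl] and are
   directly handled by [ring]. *)
Fixpoint csum (f : nat -> C) (n : nat) : C :=
  match n with O => f O | S m => csum f m + f (S m) end.
Fixpoint rsum (f : nat -> R) (n : nat) : R :=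
  match n with O => f O | S m => (rsum f m + f (S m))%R end.

Lemma csum_sum_n (f : nat -> C) (n : nat) : csum f n = sum_n f n.
Proof. induction n; simpl; [rewrite sum_O | rewrite sum_Sn, <- IHn]; reflexivity. Qed.

Lemma csum_ext (f g : nat -> C) (n : nat) :
  (forall k, (k <= n)%nat -> f k = g k) -> csum f n = csum g n.
Proof. induction n; intros H; simpl; [apply H; lia|]. rewrite IHn, H by (auto; lia). reflexivity. Qed.

Lemma csum_zero (f : nat -> C) (n : nat) : (forall k, (k <= n)%nat -> f k = 0) -> csum f n = 0.
Proof. induction n; intros H; simpl; [apply H; lia|]. rewrite IHn, H by (auto; lia). ring. Qed.

Lemma csum_plus (f g : nat -> C) (n : nat) : csum (fun k => f k + g k) n = csum f n + csum g n.
Proof. induction n; simpl; [|rewrite IHn; ring]. reflexivity. Qed.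

Lemma csum_mult_l (a : C) (f : nat -> C) (n : nat) : a * csum f n = csum (fun k => a * f k) n.
Proof. induction n; simpl; [|rewrite <- IHn; ring]. reflexivity. Qed.

Lemma csum_mult_r (a : C) (f : nat -> C) (n : nat) : csum f n * a = csum (fun k => f k * a) n.
Proof. induction n; simpl; [|rewrite <- IHn; ring]. reflexivity. Qed.

Lemma csum_conj (f : nat -> C) (n : nat) : Cconj (csum f n) = csum (fun k => Cconj (f k)) n.
Proof. induction n; simpl; [|rewrite Cplus_conj, IHn]; reflexivity. Qed.

Lemma csum_shift (f : nat -> C) (n : nat) : csum f (S n) = f 0%nat + csum (fun k => f (S k)) n.
Proof. induction n; [reflexivity|]. cbn [csum] in *. rewrite IHn. ring. Qed.

Lemma csum_swap (f : nat -> nat -> C) (n m : nat) :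
  csum (fun i => csum (fun j => f i j) m) n = csum (fun j => csum (fun i => f i j) n) m.
Proof. induction n; simpl; [|rewrite IHn, <- csum_plus]; reflexivity. Qed.

Lemma csum_mult (f g : nat -> C) (n m : nat) :
  csum f n * csum g m = csum (fun i => csum (fun j => f i * g j) m) n.
Proof. rewrite csum_mult_r. apply csum_ext. intros k _. apply csum_mult_l. Qed.

Lemma csum_delta (f : nat -> C) (n i : nat) : (i <= n)%nat ->
  csum (fun k => if Nat.eq_dec k i then f k else 0) n = f i.
Proof.
  induction n; intros H; cbn [csum].
  - assert (i = 0%nat) by lia. subst. destruct (Nat.eq_dec 0 0); [reflexivity|lia].
  - destruct (Nat.eq_dec (S n) i) as [<-|Hne].
    + rewrite csum_zero; [ring|]. intros k Hk. destruct (Nat.eq_dec k (S n)); [lia|reflexivity].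
    + rewrite IHn by lia. ring.
Qed.

Lemma csum_const (c : C) (n : nat) : csum (fun _ => c) n = RtoC (INR (S n)) * c.
Proof. induction n; simpl csum; [simpl; ring|]. rewrite IHn, (S_INR (S n)), RtoC_plus. ring. Qed.

Lemma csum_geom (u : C) (n : nat) : (u - 1) * csum (fun j => u ^ j) n = u ^ (S n) - 1.
Proof. induction n; simpl csum; [simpl; ring|]. rewrite Cmult_plus_distr_l, IHn. simpl. ring. Qed.

Lemma csum_geom_root (u : C) (n : nat) : u ^ (S n) = 1 -> u <> 1 -> csum (fun j => u ^ j) n = 0.
Proof.
  intros Hu Hu1. assert (E := csum_geom u n).
  rewrite Hu in E. replace (1 - 1) with (RtoC 0) in E by ring.
  apply Cmult_integral in E as [E|E]; [|exact E].
  exfalso. apply Hu1. rewrite <- (Cplus_0_l 1), <- E. ring.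
Qed.

Lemma RtoC_rsum (f : nat -> R) (n : nat) : RtoC (rsum f n) = csum (fun k => RtoC (f k)) n.
Proof. induction n; simpl; [|rewrite RtoC_plus, IHn]; reflexivity. Qed.

Lemma rsum_le (f g : nat -> R) (n : nat) :
  (forall k, (k <= n)%nat -> f k <= g k)%R -> (rsum f n <= rsum g n)%R.
Proof. induction n; intros H; simpl; [apply H; lia|]. apply Rplus_le_compat; auto. Qed.

Lemma rsum_mult_l (a : R) (f : nat -> R) (n : nat) : (a * rsum f n = rsum (fun k => a * f k) n)%R.
Proof. induction n; simpl; [|rewrite <- IHn; ring]. reflexivity. Qed.

Lemma rsum_shift (f : nat -> R) (n : nat) : rsum f (S n) = (f 0%nat + rsum (fun k => f (S k)) n)%R.
Proof. induction n; [reflexivity|]. cbn [rsum] in *. rewrite IHn. ring. Qed.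

Lemma rsum_zero (f : nat -> R) (n : nat) : (forall k, (k <= n)%nat -> f k = 0%R) -> rsum f n = 0%R.
Proof. induction n; intros H; simpl; [apply H; lia|]. rewrite IHn, H by (auto; lia). ring. Qed.

Lemma rsum_ge_1_2 (f : nat -> R) (K : nat) : (forall k, (k <= K)%nat -> 0 <= f k)%R -> (2 <= K)%nat ->
  (f 1%nat + f 2%nat <= rsum f K)%R.
Proof.
  intros H HK. induction HK; simpl.
  - assert (0 <= f 0%nat)%R by (apply H; lia). lra.
  - assert (0 <= f (S m))%R by (apply H; lia).
    assert (f 1%nat + f 2%nat <= rsum f m)%R by (apply IHHK; intros; apply H; lia). lra.
Qed.

Definition cis (a : R) : C := (cos a, sin a).

Lemma cis_pow (a : R) (k : nat) : cis a ^ k = cis (INR k * a).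
Proof.
  unfold cis. induction k.
  - simpl. rewrite Rmult_0_l, cos_0, sin_0. reflexivity.
  - rewrite Cpow_S, IHk, S_INR. unfold Cmult. simpl.
    rewrite Rmult_plus_distr_r, Rmult_1_l, cos_plus, sin_plus. f_equal; ring.
Qed.

Lemma Cmod_cis (a : R) : Cmod (cis a) = 1%R.
Proof.
  unfold Cmod, cis. cbn [fst snd]. rewrite <- sqrt_1. f_equal.
  rewrite <- (sin2_cos2 a). unfold Rsqr. ring.
Qed.

Lemma cos_lt_1 (x : R) : (0 < x < 2 * PI)%R -> (cos x < 1)%R.
Proof.
  intros H. replace x with (2 * (x / 2))%R by field. rewrite cos_2a_sin.
  assert (0 < sin (x / 2))%R by (apply sin_gt_0; lra). nra.
Qed.

Section RootsOfUnity.
Variable K : nat.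

Definition omega : C := cis (2 * PI / INR (S K)).

Let HK : (0 < INR (S K))%R.
Proof. apply lt_0_INR. lia. Qed.

Lemma Cmod_omega_pow (k : nat) : Cmod (omega ^ k) = 1%R.
Proof. rewrite Cmod_pow. unfold omega. rewrite Cmod_cis. apply pow1. Qed.

Lemma omega_pow_order : omega ^ (S K) = 1.
Proof.
  unfold omega. rewrite cis_pow. replace (INR (S K) * (2 * PI / INR (S K)))%R with (2 * PI)%R.
  - unfold cis. rewrite cos_2PI, sin_2PI. reflexivity.
  - field. lra.
Qed.

Lemma omega_pow_neq_1 (k : nat) : (0 < k < S K)%nat -> omega ^ k <> 1.
Proof.
  intros Hk E. unfold omega in E. rewrite cis_pow in E.
  apply (f_equal fst) in E. unfold cis in E. cbn [fst] in E. change (fst (RtoC 1)) with 1%R in E.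
  assert (HPI := PI_RGT_0).
  assert (0 < INR k)%R by (apply lt_0_INR; lia).
  assert (INR k < INR (S K))%R by (apply lt_INR; lia).
  assert (Hc : (cos (INR k * (2 * PI / INR (S K))) < 1)%R).
  { apply cos_lt_1. split.
    - apply Rmult_lt_0_compat; [lra|]. apply Rdiv_lt_0_compat; lra.
    - apply Rmult_lt_reg_r with (INR (S K)); [exact HK|].
      replace (INR k * (2 * PI / INR (S K)) * INR (S K))%R with (INR k * (2 * PI))%R
        by (field; lra). nra. }
  lra.
Qed.

Lemma omega_pow_unit (k : nat) : omega ^ k * Cconj (omega ^ k) = 1.
Proof. rewrite <- Cmod2_conj, Cmod_omega_pow, pow1. reflexivity. Qed.

Lemma omega_pow_inj (n m : nat) : (n < m <= K)%nat -> omega ^ n <> omega ^ m.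
Proof.
  intros H E. replace m with (n + (m - n))%nat in E by lia. rewrite Cpow_add_r in E.
  assert (E2 : omega ^ n * (omega ^ (m - n) - 1) = 0).
  { replace (omega ^ n * (omega ^ (m - n) - 1)) with (omega ^ n * omega ^ (m - n) - omega ^ n)
      by ring. rewrite <- E. ring. }
  apply Cmult_integral in E2 as [E2|E2].
  - assert (T := Cmod_omega_pow n). rewrite E2, Cmod_0 in T. lra.
  - apply (omega_pow_neq_1 (m - n)); [lia|]. rewrite <- (Cplus_0_l 1), <- E2. ring.
Qed.

Lemma omega_orthogonality (n m : nat) : (n <= K)%nat -> (m <= K)%nat ->
  csum (fun j => (omega ^ n * Cconj (omega ^ m)) ^ j) K =
  if Nat.eq_dec m n then RtoC (INR (S K)) else 0.
Proof.
  intros Hn Hm. destruct (Nat.eq_dec m n) as [->|Hne].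
  - rewrite omega_pow_unit, (csum_ext _ (fun _ => 1)), csum_const; [ring|].
    intros. apply Cpow_1_l.
  - apply csum_geom_root.
    + rewrite Cpow_mult_l, <- Cpow_conj, <- !Cpow_mult_r.
      rewrite (Nat.mul_comm n), (Nat.mul_comm m), !Cpow_mult_r, omega_pow_order, !Cpow_1_l.
      apply injective_projections; cbn; ring.
    + intro E. assert (E2 : omega ^ n = omega ^ m).
      { rewrite <- (Cmult_1_r (omega ^ n)), <- (omega_pow_unit m).
        rewrite (Cmult_comm (omega ^ m)), Cmult_assoc, E. ring. }
      destruct (Nat.lt_total n m) as [Hl|[Hl|Hl]]; [| lia |].
      * apply (omega_pow_inj n m); [lia | exact E2].
      * apply (omega_pow_inj m n); [lia | symmetry; exact E2].
Qed.

Lemma discrete_parseval (p : nat -> C) (r : R) :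
  rsum (fun j => Cmod (csum (fun n => p n * (RtoC r * omega ^ j) ^ n) K)%C ^ 2)%R K
  = (INR (S K) * rsum (fun n => Cmod (p n) ^ 2 * r ^ (n + n)) K)%R.
Proof.
  assert (Hswap : forall (a : C) j n, (a ^ j) ^ n = (a ^ n) ^ j).
  { intros a j n. rewrite <- !Cpow_mult_r, Nat.mul_comm. reflexivity. }
  apply RtoC_inj. rewrite RtoC_mult, !RtoC_rsum.
  transitivity (csum (fun j => csum (fun n => csum (fun m =>
     (p n * Cconj (p m) * RtoC r ^ n * RtoC r ^ m) * (omega ^ n * Cconj (omega ^ m)) ^ j) K) K) K).
  { apply csum_ext. intros j _. rewrite Cmod2_conj, csum_conj, csum_mult.
    apply csum_ext; intros n _. apply csum_ext; intros m _.
    rewrite Cmult_conj, Cpow_conj, Cmult_conj.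
    replace (Cconj (RtoC r)) with (RtoC r) by (apply injective_projections; simpl; ring).
    rewrite !Cpow_mult_l, (Hswap omega j n), <- Cpow_conj, (Hswap omega j m), Cpow_conj,
      <- (Cpow_conj (omega ^ m)).
    ring. }
  rewrite csum_swap, csum_mult_l. apply csum_ext. intros n Hn.
  rewrite csum_swap.
  rewrite (csum_ext _ (fun m => if Nat.eq_dec m n then
      (p n * Cconj (p m) * RtoC r ^ n * RtoC r ^ m) * RtoC (INR (S K)) else 0)).
  - rewrite csum_delta by exact Hn.
    rewrite RtoC_mult, pow_add, RtoC_mult, Cmod2_conj, !RtoC_pow. ring.
  - intros m Hm. rewrite <- csum_mult_l, omega_orthogonality by assumption.
    destruct (Nat.eq_dec m n); ring.
Qed.

End RootsOfUnity.

(** * Coefficient bounds for Schur functions *)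

Definition schur_function (h : ps) : Prop :=
  analytic_disk h /\ h 0%nat = 0 /\ forall z v, inDisk z -> is_pseries h z v -> inDisk v.

Definition truncate (h : ps) (N : nat) : ps := fun n => if le_dec n N then h n else 0.

Definition lin_factor (b : C) (p : ps) : ps := psadd p (pscale b (psmulz p)).

Lemma csum_truncate (h : ps) (N : nat) (z : C) :
  csum (fun n => truncate h N n * z ^ n) N = partial_sum h z N.
Proof.
  unfold partial_sum. rewrite <- csum_sum_n. apply csum_ext. intros k Hk.
  unfold truncate. destruct (le_dec k N); [ring | lia].
Qed.

Lemma csum_lin_factor (b : C) (p : ps) (z : C) (N : nat) :
  csum (fun n => lin_factor b p n * z ^ n) (S N)
  = csum (fun n => p n * z ^ n) N * (1 + b * z) + p (S N) * z ^ (S N).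
Proof.
  unfold lin_factor, psadd, pscale.
  rewrite (csum_ext _ (fun n => p n * z ^ n + b * psmulz p n * z ^ n)) by (intros; ring).
  rewrite csum_plus, (csum_shift (fun n => b * psmulz p n * z ^ n)).
  rewrite (csum_ext (fun k => b * psmulz p (S k) * z ^ S k) (fun k => (b * z) * (p k * z ^ k)))
    by (intros; simpl; ring).
  rewrite <- csum_mult_l. simpl. ring.
Qed.

Lemma lin_factor_truncate_low (b : C) (h : ps) (N : nat) : h 0%nat = 0 -> (2 <= N)%nat ->
  lin_factor b (truncate h N) 1%nat = h 1%nat /\
  lin_factor b (truncate h N) 2%nat = h 2%nat + b * h 1%nat.
Proof.
  intros H0 HN. unfold lin_factor, psadd, pscale, psmulz, truncate.
  destruct (le_dec 0 N); [|lia]. destruct (le_dec 1 N); [|lia]. destruct (le_dec 2 N); [|lia].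
  rewrite H0. split; ring.
Qed.

Lemma csum_lin_factor_one (b z : C) (K : nat) : (1 <= K)%nat ->
  csum (fun n => lin_factor b psone n * z ^ n) K = 1 + b * z.
Proof.
  intros HK. destruct K as [|N]; [lia|]. rewrite csum_lin_factor.
  destruct N as [|N]; [simpl; ring|].
  rewrite csum_shift, csum_zero; [simpl; ring|]. intros k _. simpl. ring.
Qed.

Lemma rsum_lin_factor_one (b : C) (r : R) (K : nat) : (1 <= K)%nat ->
  rsum (fun n => Cmod (lin_factor b psone n) ^ 2 * r ^ (n + n))%R K = (1 + Cmod b ^ 2 * r ^ 2)%R.
Proof.
  intros HK. destruct K as [|K]; [lia|]. rewrite rsum_shift.
  unfold lin_factor, psadd, pscale, psmulz, psone.
  destruct K as [|K].
  - simpl. rewrite Cplus_0_l, Cmult_0_r, Cplus_0_r, Cmult_1_r, Cmod_1. ring.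
  - rewrite rsum_shift, rsum_zero.
    + simpl. rewrite Cplus_0_l, Cmult_0_r, Cplus_0_r, Cmult_1_r, Cmod_1. ring.
    + intros k _. simpl. rewrite Cmult_0_r, Cplus_0_r, Cmod_0. ring.
Qed.

Lemma le_of_le_sq_1_plus_eps (X Y : R) : (0 <= Y)%R ->
  (forall eps, 0 < eps -> X <= (1 + eps) ^ 2 * Y)%R -> (X <= Y)%R.
Proof.
  intros HY H. apply Rnot_lt_le. intro HXY.
  set (e := Rmin 1 ((X - Y) / (3 * (Y + 1)))).
  assert (He : (0 < e)%R) by (apply Rmin_glb_lt; [lra | apply Rdiv_lt_0_compat; lra]).
  assert (He1 : (e <= 1)%R) by apply Rmin_l.
  assert (He2 : (e * (3 * (Y + 1)) <= X - Y)%R).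
  { apply Rmult_le_reg_r with (/ (3 * (Y + 1)))%R; [apply Rinv_0_lt_compat; lra|].
    rewrite Rmult_assoc, Rinv_r, Rmult_1_r by lra. apply Rmin_r. }
  specialize (H e He). nra.
Qed.

Lemma le_of_le_mult_r4 (W Y : R) : (0 <= Y)%R ->
  (forall r, 0 < r < 1 -> W * r ^ 4 <= Y)%R -> (W <= Y)%R.
Proof.
  intros HY H. apply Rnot_lt_le. intro HW.
  set (d := Rmin (1/2) ((W - Y) / (8 * W))).
  assert (Hd : (0 < d)%R) by (apply Rmin_glb_lt; [lra | apply Rdiv_lt_0_compat; lra]).
  assert (Hd1 : (d <= 1/2)%R) by apply Rmin_l.
  assert (Hd2 : (d * (8 * W) <= W - Y)%R).
  { apply Rmult_le_reg_r with (/ (8 * W))%R; [apply Rinv_0_lt_compat; lra|].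
    rewrite Rmult_assoc, Rinv_r, Rmult_1_r by lra. apply Rmin_r. }
  specialize (H (1 - d)%R ltac:(lra)).
  assert (Hr4 : (1 - 4 * d <= (1 - d) ^ 4)%R).
  { assert (0 <= d * d * (6 - 4 * d + d * d))%R by (apply Rmult_le_pos; nra). nra. }
  nra.
Qed.

Section SchurFunction.
Variable h : ps.
Hypothesis Hh : schur_function h.

Lemma schur_partial_sum_bound (r eps : R) : (0 < r < 1)%R -> (0 < eps)%R ->
  exists N, (2 <= N)%nat /\ forall z, Cmod z = r -> (Cmod (partial_sum h z N) <= 1 + eps)%R.
Proof.
  intros Hr Heps. destruct Hh as [Ha [_ Hd]].
  set (rho := ((1 + r) / 2)%R).
  destruct (analytic_disk_coef_bound h rho Ha) as [B HB]; [unfold rho; lra|].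
  assert (HB0 : (0 <= B)%R).
  { specialize (HB 0%nat). simpl in HB. assert (T := Cmod_ge_0 (h 0%nat)). lra. }
  set (t := (r / rho)%R).
  assert (Ht : (0 <= t < 1)%R).
  { unfold t, rho. split; [apply Rdiv_le_0_compat; lra|].
    apply Rmult_lt_reg_r with ((1 + r) / 2)%R; [lra|]. unfold Rdiv. field_simplify; lra. }
  destruct (pow_lt_1_zero t ltac:(rewrite Rabs_pos_eq; lra) (eps * (1 - t) / (B + 1))%R)
    as [N0 HN0].
  { apply Rdiv_lt_0_compat; [apply Rmult_lt_0_compat|]; lra. }
  exists (N0 + 2)%nat. split; [lia|]. intros z Hz.
  assert (Htail : (B * t ^ S (N0 + 2) / (1 - t) <= eps)%R).
  { specialize (HN0 (S (N0 + 2)) ltac:(lia)).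
    rewrite Rabs_pos_eq in HN0 by (apply pow_le; lra).
    assert (0 <= t ^ S (N0 + 2))%R by (apply pow_le; lra).
    apply Rle_trans with ((B + 1) * t ^ S (N0 + 2) / (1 - t))%R.
    { unfold Rdiv. apply Rmult_le_compat_r; [apply Rlt_le, Rinv_0_lt_compat; lra | nra]. }
    apply Rmult_le_reg_r with ((1 - t) / (B + 1))%R; [apply Rdiv_lt_0_compat; lra|].
    replace ((B + 1) * t ^ S (N0 + 2) / (1 - t) * ((1 - t) / (B + 1)))%R
      with (t ^ S (N0 + 2))%R by (field; lra).
    replace (eps * ((1 - t) / (B + 1)))%R with (eps * (1 - t) / (B + 1))%R by (field; lra).
    lra. }
  destruct (Ha z) as [v Hv]; [unfold inDisk; lra|]. change C in v.
  assert (Hv1 := Hd z v ltac:(unfold inDisk; lra) Hv). unfold inDisk in Hv1.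
  assert (T := pseries_tail_bound h z v rho r B (N0 + 2) ltac:(unfold rho; lra)
    ltac:(unfold rho; lra) ltac:(lra) HB Hv).
  fold t in T.
  assert (T2 := Cmod_le_plus (partial_sum h z (N0 + 2)) (v - partial_sum h z (N0 + 2))).
  replace (partial_sum h z (N0 + 2) + (v - partial_sum h z (N0 + 2))) with v in T2 by ring.
  lra.
Qed.

(* Parseval at the roots of unity, applied to h_N(z)(1 + b z) and to 1 + b z. *)
Lemma schur_weighted_estimate_eps (b : C) (r eps : R) : (0 < r < 1)%R -> (0 < eps)%R ->
  (Cmod (h 1%nat) ^ 2 * r ^ 2 + Cmod (h 2%nat + b * h 1%nat) ^ 2 * r ^ 4
     <= (1 + eps) ^ 2 * (1 + Cmod b ^ 2 * r ^ 2))%R.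
Proof.
  intros Hr Heps.
  destruct (schur_partial_sum_bound r eps Hr Heps) as [N [HN Hbound]].
  set (K := S N). set (P := lin_factor b (truncate h N)).
  assert (HK : (0 < INR (S K))%R) by (apply lt_0_INR; lia).
  assert (HP := discrete_parseval K P r).
  assert (HQ := discrete_parseval K (lin_factor b psone) r).
  rewrite rsum_lin_factor_one in HQ by (unfold K; lia).
  assert (Hsample : (rsum (fun j => Cmod (csum (fun n => P n * (RtoC r * omega K ^ j) ^ n) K)%C ^ 2) K
     <= (1 + eps) ^ 2 * rsum (fun j =>
          Cmod (csum (fun n => lin_factor b psone n * (RtoC r * omega K ^ j) ^ n) K)%C ^ 2) K)%R).
  { rewrite rsum_mult_l. apply rsum_le. intros j _.
    unfold K, P. rewrite csum_lin_factor, csum_lin_factor_one, csum_truncate by lia.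
    unfold truncate. destruct (le_dec (S N) N) as [|_]; [lia|].
    rewrite Cmult_0_l, Cplus_0_r, Cmod_mult, Rpow_mult_distr.
    apply Rmult_le_compat_r; [apply pow2_ge_0|].
    assert (0 <= Cmod (partial_sum h (RtoC r * omega K ^ j) N))%R by apply Cmod_ge_0.
    assert (Cmod (partial_sum h (RtoC r * omega K ^ j) N) <= 1 + eps)%R.
    { apply Hbound. rewrite Cmod_mult, Cmod_omega_pow, Cmod_R, Rabs_pos_eq; lra. }
    fold K. nra. }
  rewrite HP, HQ in Hsample.
  assert (Hlow : (Cmod (h 1%nat) ^ 2 * r ^ 2 + Cmod (h 2%nat + b * h 1%nat) ^ 2 * r ^ 4
     <= rsum (fun n => Cmod (P n) ^ 2 * r ^ (n + n)) K)%R).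
  { destruct (lin_factor_truncate_low b h N (proj1 (proj2 Hh)) HN) as [P1 P2].
    fold P in P1, P2. rewrite <- P2, <- P1.
    apply (rsum_ge_1_2 (fun n => Cmod (P n) ^ 2 * r ^ (n + n))%R); [|unfold K; lia].
    intros k _. apply Rmult_le_pos; [apply pow2_ge_0 | apply pow_le; lra]. }
  apply Rmult_le_reg_l with (INR (S K)); [exact HK|].
  nra.
Qed.

Lemma schur_weighted_estimate (b : C) :
  (Cmod (h 1%nat) ^ 2 + Cmod (h 2%nat + b * h 1%nat) ^ 2 <= 1 + Cmod b ^ 2)%R.
Proof.
  assert (Hb := pow2_ge_0 (Cmod b)).
  apply le_of_le_mult_r4; [lra|]. intros r Hr.
  assert (Hr2 : (0 <= r ^ 2 <= 1)%R) by (split; [apply pow2_ge_0 | simpl; nra]).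
  assert (Hr4 : (r ^ 4 <= r ^ 2)%R) by (replace (r ^ 4)%R with (r ^ 2 * r ^ 2)%R by ring; nra).
  assert (T : (Cmod (h 1%nat) ^ 2 * r ^ 2 + Cmod (h 2%nat + b * h 1%nat) ^ 2 * r ^ 4
     <= 1 + Cmod b ^ 2 * r ^ 2)%R).
  { apply le_of_le_sq_1_plus_eps; [nra|]. intros eps Heps.
    apply schur_weighted_estimate_eps; assumption. }
  assert (T1 := pow2_ge_0 (Cmod (h 1%nat))).
  assert (T2 := pow2_ge_0 (Cmod (h 2%nat + b * h 1%nat))).
  nra.
Qed.

(* The choice b = conj(h1) h2 / (1 - |h1|^2) optimizes the weighted estimate. *)
Lemma schur_coef_bounds :
  (Cmod (h 1%nat) <= 1)%R /\ (Cmod (h 2%nat) <= 1 - Cmod (h 1%nat) ^ 2)%R.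
Proof.
  set (a := Cmod (h 1%nat)). set (c := Cmod (h 2%nat)).
  assert (Ha0 : (0 <= a)%R) by apply Cmod_ge_0.
  assert (Hc0 : (0 <= c)%R) by apply Cmod_ge_0.
  assert (K0 := schur_weighted_estimate 0).
  rewrite Cmult_0_l, Cplus_0_r, Cmod_0 in K0. fold a c in K0.
  assert (Ha1 : (a <= 1)%R) by nra.
  split; [exact Ha1|].
  destruct (Req_dec a 1) as [Ea|Ea].
  - rewrite Ea in K0 |- *. assert (c = 0)%R by nra. lra.
  - set (D := (1 - a ^ 2)%R). assert (HD : (0 < D)%R) by (unfold D; nra).
    assert (HDc : RtoC D <> 0) by (intro E; apply RtoC_inj in E; lra).
    set (b := Cconj (h 1%nat) * h 2%nat / RtoC D).
    assert (Eb : h 2%nat + b * h 1%nat = h 2%nat * RtoC (/ D)).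
    { assert (E : h 1%nat * Cconj (h 1%nat) = RtoC (a ^ 2)) by (symmetry; apply Cmod2_conj).
      unfold b. rewrite RtoC_inv by lra.
      replace (h 2%nat + Cconj (h 1%nat) * h 2%nat / D * h 1%nat) with
        (h 2%nat * ((RtoC D + h 1%nat * Cconj (h 1%nat)) / RtoC D)) by (field; exact HDc).
      rewrite E. unfold D. rewrite RtoC_minus. field.
      intro E'. apply HDc. unfold D. rewrite RtoC_minus. exact E'. }
    assert (K1 := schur_weighted_estimate b). rewrite Eb in K1.
    assert (Cb : Cmod b = (a * c / D)%R).
    { unfold b. rewrite Cmod_div by exact HDc.
      rewrite Cmod_mult, Cmod_conj, Cmod_R, Rabs_pos_eq by lra. reflexivity. }
    rewrite Cb, Cmod_mult, Cmod_R, Rabs_pos_eq in K1 by (apply Rlt_le, Rinv_0_lt_compat; lra).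
    fold a c in K1.
    assert (E2 : (a ^ 2 + (c * / D) ^ 2 - (1 + (a * c / D) ^ 2) = (c ^ 2 - D ^ 2) / D)%R)
      by (unfold D; field; fold D; lra).
    assert (Hneg : ((c ^ 2 - D ^ 2) / D <= 0)%R) by lra.
    assert (Hcd : (c ^ 2 - D ^ 2 <= 0)%R).
    { apply Rmult_le_reg_r with (/ D)%R; [apply Rinv_0_lt_compat; lra|]. lra. }
    nra.
Qed.

End SchurFunction.

(** * Coefficients of the inverse function *)

Lemma pow_le_pow_of_le_1 (t : R) (m n : nat) : (0 <= t <= 1)%R -> (m <= n)%nat -> (t ^ n <= t ^ m)%R.
Proof.
  intros Ht Hmn. induction Hmn; [lra|]. simpl.
  assert (0 <= t ^ m0)%R by (apply pow_le; lra). nra.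
Qed.

Definition cubic_part (c : ps) (z : C) : C :=
  c 0%nat + c 1%nat * z + c 2%nat * z ^ 2 + c 3%nat * z ^ 3.

Lemma pseries_cubic_remainder (c : ps) : analytic_disk c ->
  exists K, (0 <= K)%R /\ forall z v, (Cmod z <= 1/4)%R -> is_pseries c z v ->
  (Cmod (v - cubic_part c z) <= K * Cmod z ^ 4)%R.
Proof.
  intros Hc. destruct (analytic_disk_coef_bound c (1/2) Hc) as [B HB]; [lra|].
  assert (HB0 : (0 <= B)%R).
  { specialize (HB 0%nat). simpl in HB. assert (T := Cmod_ge_0 (c 0%nat)). lra. }
  exists (32 * B)%R. split; [lra|]. intros z v Hz Hv.
  assert (T := pseries_tail_bound c z v (1/2) (Cmod z) B 3 ltac:(lra)
    ltac:(split; [apply Cmod_ge_0|lra]) (Rle_refl _) HB Hv).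
  replace (partial_sum c z 3) with (cubic_part c z) in T
    by (unfold partial_sum, cubic_part; rewrite !sum_Sn, sum_O; simpl; change plus with Cplus; ring).
  eapply Rle_trans; [exact T|].
  set (r := Cmod z) in *. assert (0 <= r)%R by apply Cmod_ge_0.
  replace (r / (1/2))%R with (2 * r)%R by field.
  apply Rmult_le_reg_r with (1 - 2 * r)%R; [lra|].
  replace (B * (2 * r) ^ 4 / (1 - 2 * r) * (1 - 2 * r))%R with (B * 16 * r ^ 4)%R by (field; lra).
  assert (0 <= B * r ^ 4)%R by (apply Rmult_le_pos; [lra | apply pow_le; lra]).
  nra.
Qed.

Lemma eq_0_of_pow_bound (c : C) (A d : R) (k : nat) : (0 < d)%R ->
  (forall t, 0 < t < d -> Cmod c * t ^ k <= A * t ^ S k)%R -> c = 0.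
Proof.
  intros Hd H. apply Cmod_eq_0. apply Rle_antisym; [|apply Cmod_ge_0].
  apply Rnot_lt_le. intro Hc.
  set (t := Rmin (d / 2) (Cmod c / (2 * (Rabs A + 1)))).
  assert (HA := Rabs_pos A). assert (HA' := Rle_abs A).
  assert (Ht : (0 < t)%R) by (apply Rmin_glb_lt; [lra | apply Rdiv_lt_0_compat; lra]).
  assert (Ht1 : (t <= d / 2)%R) by apply Rmin_l.
  assert (Ht2 : (t * (2 * (Rabs A + 1)) <= Cmod c)%R).
  { apply Rmult_le_reg_r with (/ (2 * (Rabs A + 1)))%R; [apply Rinv_0_lt_compat; lra|].
    rewrite Rmult_assoc, Rinv_r, Rmult_1_r by lra. apply Rmin_r. }
  specialize (H t ltac:(lra)).
  assert (Hct : (Cmod c <= A * t)%R).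
  { apply Rmult_le_reg_r with (t ^ k)%R; [apply pow_lt; exact Ht|].
    rewrite <- tech_pow_Rmult in H. lra. }
  nra.
Qed.

Lemma cubic_eq_0_of_small (c1 c2 c3 : C) (K d : R) : (0 < d)%R ->
  (forall t, 0 < t < d ->
     Cmod (c1 * RtoC t + c2 * RtoC t ^ 2 + c3 * RtoC t ^ 3) <= K * t ^ 4)%R ->
  c1 = 0 /\ c2 = 0 /\ c3 = 0.
Proof.
  intros Hd H. set (d' := Rmin d 1).
  assert (Hd' : (0 < d')%R) by (apply Rmin_glb_lt; lra).
  assert (Hd1 : (d' <= d)%R) by apply Rmin_l. assert (Hd2 : (d' <= 1)%R) by apply Rmin_r.
  assert (Hmod : forall (c : C) t k, (0 <= t)%R -> Cmod (c * RtoC t ^ k) = (Cmod c * t ^ k)%R).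
  { intros c t k Ht. rewrite Cmod_mult, Cmod_pow, Cmod_R, Rabs_pos_eq by exact Ht. reflexivity. }
  assert (Hsmall : forall t, (0 < t < d')%R ->
    (Cmod (c1 * RtoC t ^ 1 + c2 * RtoC t ^ 2 + c3 * RtoC t ^ 3) <= K * t ^ 4)%R /\ (0 <= K)%R /\
    (t ^ 4 <= t ^ 3 <= t ^ 2)%R /\ (t ^ 2 <= t ^ 1)%R).
  { intros t Ht. assert (Hb := H t ltac:(lra)).
    replace (c1 * RtoC t) with (c1 * RtoC t ^ 1) in Hb by ring.
    split; [exact Hb|]. split.
    - assert (T := Cmod_ge_0 (c1 * RtoC t ^ 1 + c2 * RtoC t ^ 2 + c3 * RtoC t ^ 3)).
      assert (0 < t ^ 4)%R by (apply pow_lt; lra). nra.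
    - repeat split; apply pow_le_pow_of_le_1; lra || lia. }
  assert (Hc2 := Cmod_ge_0 c2). assert (Hc3 := Cmod_ge_0 c3).
  assert (E1 : c1 = 0).
  { apply (eq_0_of_pow_bound c1 (K + Cmod c2 + Cmod c3) d' 1 Hd'). intros t Ht.
    destruct (Hsmall t Ht) as [Hb [HK [[H43 H32] H21]]].
    assert (T := Cmod_le_plus (c1 * RtoC t ^ 1) (c2 * RtoC t ^ 2 + c3 * RtoC t ^ 3)).
    assert (T2 := Cmod_triangle (c2 * RtoC t ^ 2) (c3 * RtoC t ^ 3)).
    rewrite Cplus_assoc, Hmod in T by lra. rewrite !Hmod in T2 by lra.
    assert (0 <= t ^ 1)%R by (apply pow_le; lra). nra. }
  subst c1.
  assert (E2 : c2 = 0).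
  { apply (eq_0_of_pow_bound c2 (K + Cmod c3) d' 2 Hd'). intros t Ht.
    destruct (Hsmall t Ht) as [Hb [HK [[H43 H32] _]]].
    rewrite Cmult_0_l, Cplus_0_l in Hb.
    assert (T := Cmod_le_plus (c2 * RtoC t ^ 2) (c3 * RtoC t ^ 3)).
    rewrite !Hmod in T by lra. nra. }
  subst c2. split; [reflexivity|]. split; [reflexivity|].
  apply (eq_0_of_pow_bound c3 K d' 3 Hd'). intros t Ht.
  destruct (Hsmall t Ht) as [Hb _].
  rewrite !Cmult_0_l, !Cplus_0_l, Hmod in Hb by lra. exact Hb.
Qed.

Lemma csum_poly_bound (f : nat -> C) (n : nat) (t : R) : (0 <= t <= 1)%R ->
  (Cmod (csum (fun k => f k * RtoC t ^ k) n)%C <= rsum (fun k => Cmod (f k)) n)%R.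
Proof.
  intros Ht. induction n; simpl csum; simpl rsum.
  - rewrite Cmod_mult. simpl. rewrite Cmod_1. lra.
  - eapply Rle_trans; [apply Cmod_triangle|]. apply Rplus_le_compat; [exact IHn|].
    rewrite Cmod_mult, Cmod_mult, Cmod_pow, Cmod_R, Rabs_pos_eq by lra.
    change (t * t ^ n)%R with (t ^ S n)%R.
    assert (t ^ S n <= 1)%R by (rewrite <- (pow_O t); apply pow_le_pow_of_le_1; lra || lia).
    assert (0 <= Cmod (f (S n)))%R by apply Cmod_ge_0. nra.
Qed.

Lemma Cmod_cubic_le (b1 b2 b3 : C) (t : R) : (0 <= t <= 1)%R ->
  (Cmod (b1 * RtoC t + b2 * RtoC t ^ 2 + b3 * RtoC t ^ 3) <= (Cmod b1 + Cmod b2 + Cmod b3) * t)%R.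
Proof.
  intros Ht. eapply Rle_trans; [apply Cmod_triangle3|].
  rewrite !Cmod_mult, !Cmod_pow, Cmod_R, Rabs_pos_eq by lra.
  assert (T1 := Cmod_ge_0 b1). assert (T2 := Cmod_ge_0 b2). assert (T3 := Cmod_ge_0 b3).
  assert (t ^ 2 <= t ^ 1)%R by (apply pow_le_pow_of_le_1; lra || lia).
  assert (t ^ 3 <= t ^ 1)%R by (apply pow_le_pow_of_le_1; lra || lia).
  simpl in *. nra.
Qed.

(* Coefficients of w, w^2, w^3 in f(g(w)) - w, for f = z + a2 z^2 + a3 z^3 + ... and
   g = b1 w + b2 w^2 + b3 w^3 + ... *)
Definition compose_defect (a2 a3 b1 b2 b3 w : C) : C :=
  (b1 - 1) * w + (b2 + a2 * b1 ^ 2) * w ^ 2 + (b3 + 2 * a2 * b1 * b2 + a3 * b1 ^ 3) * w ^ 3.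

(* coefficients of w^4, ..., w^9 in the composition of the two cubic parts *)
Definition compose_tail (a2 a3 b1 b2 b3 : C) (k : nat) : C :=
  match k with
  | O => a2 * (b2 ^ 2 + 2 * b1 * b3) + 3 * a3 * b1 ^ 2 * b2
  | 1%nat => 2 * a2 * b2 * b3 + a3 * (3 * b1 * b2 ^ 2 + 3 * b1 ^ 2 * b3)
  | 2%nat => a2 * b3 ^ 2 + a3 * (b2 ^ 3 + 6 * b1 * b2 * b3)
  | 3%nat => a3 * (3 * b2 ^ 2 * b3 + 3 * b1 * b3 ^ 2)
  | 4%nat => 3 * a3 * b2 * b3 ^ 2
  | 5%nat => a3 * b3 ^ 3
  | _ => 0
  end.

(* f3 v - f3 p = (v - p) Q(v, p), f3 and p being the cubic parts of f and g *)
Lemma compose_defect_identity (a2 a3 b1 b2 b3 w v : C) :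
  let p := b1 * w + b2 * w ^ 2 + b3 * w ^ 3 in
  compose_defect a2 a3 b1 b2 b3 w =
  - (w - (v + a2 * v ^ 2 + a3 * v ^ 3))
  - (v - p) * (1 + a2 * (v + p) + a3 * (v ^ 2 + v * p + p ^ 2))
  - w ^ 4 * csum (fun k => compose_tail a2 a3 b1 b2 b3 k * w ^ k) 5.
Proof. intros p. unfold p, compose_defect, compose_tail. simpl csum. ring. Qed.

Lemma compose_defect_bound (a2 a3 b1 b2 b3 v : C) (t V Ka Kb : R) :
  let w := RtoC t in let p := b1 * w + b2 * w ^ 2 + b3 * w ^ 3 in
  (0 < t <= 1)%R -> (Cmod v <= V * t)%R -> (Cmod b1 + Cmod b2 + Cmod b3 <= V)%R ->
  (Cmod (v - p) <= Kb * t ^ 4)%R -> (0 <= Kb)%R ->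
  (Cmod (w - (v + a2 * v ^ 2 + a3 * v ^ 3)) <= Ka * t ^ 4)%R ->
  (Cmod (compose_defect a2 a3 b1 b2 b3 w)
     <= (Ka + Kb * (1 + Cmod a2 * (2 * V) + Cmod a3 * (3 * V ^ 2))
         + rsum (fun k => Cmod (compose_tail a2 a3 b1 b2 b3 k)) 5) * t ^ 4)%R.
Proof.
  intros w p Ht Hv HV Hvp HKb Hf.
  assert (Hw : Cmod w = t) by (unfold w; rewrite Cmod_R, Rabs_pos_eq; lra).
  assert (Hpos := Cmod_ge_0 v). assert (Hp0 := Cmod_ge_0 p).
  assert (Hp : (Cmod p <= V * t)%R).
  { assert (T := Cmod_cubic_le b1 b2 b3 t ltac:(lra)). fold w p in T. nra. }
  assert (HVt : (V * t <= V)%R) by nra.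
  assert (HQ : (Cmod (1 + a2 * (v + p) + a3 * (v ^ 2 + v * p + p ^ 2))
                <= 1 + Cmod a2 * (2 * V) + Cmod a3 * (3 * V ^ 2))%R).
  { eapply Rle_trans; [apply Cmod_triangle3|]. rewrite Cmod_1, !Cmod_mult.
    assert (A1 : (Cmod (v + p) <= 2 * V)%R) by (eapply Rle_trans; [apply Cmod_triangle|]; lra).
    assert (A2 : (Cmod (v ^ 2 + v * p + p ^ 2) <= 3 * V ^ 2)%R).
    { eapply Rle_trans; [apply Cmod_triangle3|]. rewrite !Cmod_pow, Cmod_mult. simpl. nra. }
    assert (T1 := Cmod_ge_0 a2). assert (T2 := Cmod_ge_0 a3).
    apply Rplus_le_compat; [apply Rplus_le_compat_l|]; apply Rmult_le_compat_l; assumption. }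
  assert (HR : (Cmod (w ^ 4 * csum (fun k => compose_tail a2 a3 b1 b2 b3 k * w ^ k) 5)%C
                <= t ^ 4 * rsum (fun k => Cmod (compose_tail a2 a3 b1 b2 b3 k)) 5)%R).
  { rewrite Cmod_mult, Cmod_pow, Hw. apply Rmult_le_compat_l; [apply pow_le; lra|].
    apply csum_poly_bound. lra. }
  rewrite (compose_defect_identity a2 a3 b1 b2 b3 w v). fold p.
  unfold Cminus. eapply Rle_trans; [apply Cmod_triangle3|]. rewrite !Cmod_opp, Cmod_mult.
  assert (Cmod (v - p) * Cmod (1 + a2 * (v + p) + a3 * (v ^ 2 + v * p + p ^ 2))
          <= Kb * t ^ 4 * (1 + Cmod a2 * (2 * V) + Cmod a3 * (3 * V ^ 2)))%R
    by (apply Rmult_le_compat; [apply Cmod_ge_0 | apply Cmod_ge_0 | exact Hvp | exact HQ]).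
  unfold Cminus in *. nra.
Qed.

Section LocalInverse.
Variables a b : ps.
Hypothesis Hab : in_Sigma a b.

Lemma inverse_coef_0 : b 0%nat = 0.
Proof.
  destruct Hab as [Ha0 [_ [[HaA HaU] [[HbA _] [r0 [Hr0 Hinv]]]]]].
  assert (H0 : inDisk (RtoC 0)) by (unfold inDisk; rewrite Cmod_0; lra).
  destruct (HbA (RtoC 0) H0) as [v Hv].
  assert (Ev := is_pseries_at_0 b v HbA Hv).
  destruct (Hinv (RtoC 0) v) as [Hvd Hva]; [rewrite Cmod_0; exact Hr0 | exact Hv |].
  destruct (HaA (RtoC 0) H0) as [u Hu].
  assert (Eu := is_pseries_at_0 a u HaA Hu). rewrite Ha0 in Eu. subst u.
  rewrite <- Ev. exact (HaU v (RtoC 0) (RtoC 0) Hvd H0 Hva Hu).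
Qed.

(* f(g(w)) = w near 0, and the cubic parts of f and g agree with f and g up to O(w^4). *)
Lemma inverse_compose_defect_small :
  exists K d, (0 < d)%R /\ forall t, (0 < t < d)%R ->
    (Cmod (compose_defect (a 2%nat) (a 3%nat) (b 1%nat) (b 2%nat) (b 3%nat) (RtoC t))
       <= K * t ^ 4)%R.
Proof.
  destruct Hab as [Ha0 [Ha1 [[HaA _] [[HbA _] [r0 [Hr0 Hinv]]]]]].
  destruct (pseries_cubic_remainder a HaA) as [Ka [HKa HTa]].
  destruct (pseries_cubic_remainder b HbA) as [Kb [HKb HTb]].
  set (V := (Cmod (b 1%nat) + Cmod (b 2%nat) + Cmod (b 3%nat) + Kb)%R).
  assert (HV : (0 <= V)%R).
  { unfold V. assert (T1 := Cmod_ge_0 (b 1%nat)). assert (T2 := Cmod_ge_0 (b 2%nat)).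
    assert (T3 := Cmod_ge_0 (b 3%nat)). lra. }
  set (d := Rmin (Rmin (1/4) (r0 / 2)) (1 / (4 * (V + 1)))).
  assert (Hd : (0 < d)%R).
  { apply Rmin_glb_lt; [apply Rmin_glb_lt; lra | apply Rdiv_lt_0_compat; lra]. }
  assert (Hd1 : (d <= 1/4)%R) by (eapply Rle_trans; [apply Rmin_l | apply Rmin_l]).
  assert (Hd2 : (d <= r0 / 2)%R) by (eapply Rle_trans; [apply Rmin_l | apply Rmin_r]).
  assert (Hd3 : (d * (4 * (V + 1)) <= 1)%R).
  { assert (H := Rmin_r (Rmin (1/4) (r0 / 2)) (1 / (4 * (V + 1)))). fold d in H.
    apply Rmult_le_reg_r with (/ (4 * (V + 1)))%R; [apply Rinv_0_lt_compat; lra|].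
    rewrite Rmult_assoc, Rinv_r by lra. unfold Rdiv in H. lra. }
  eexists. exists d. split; [exact Hd|]. intros t Ht.
  set (w := RtoC t).
  assert (Hw : Cmod w = t) by (unfold w; rewrite Cmod_R, Rabs_pos_eq; lra).
  destruct (HbA w) as [v Hv]; [unfold inDisk; lra|]. change C in v.
  destruct (Hinv w v) as [_ Hva]; [lra | exact Hv |].
  set (p := b 1%nat * w + b 2%nat * w ^ 2 + b 3%nat * w ^ 3).
  assert (Hvp : (Cmod (v - p) <= Kb * t ^ 4)%R).
  { assert (Tb := HTb w v ltac:(lra) Hv).
    unfold cubic_part in Tb. rewrite inverse_coef_0, Hw, Cplus_0_l in Tb. exact Tb. }
  assert (Hp := Cmod_cubic_le (b 1%nat) (b 2%nat) (b 3%nat) t ltac:(lra)). fold w p in Hp.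
  assert (Hvt : (Cmod v <= V * t)%R).
  { assert (T := Cmod_le_plus v (- p)). rewrite Cmod_opp in T.
    assert (t ^ 4 <= t ^ 1)%R by (apply pow_le_pow_of_le_1; lra || lia).
    unfold V. simpl in *. unfold Cminus in Hvp. nra. }
  assert (Hf : (Cmod (w - (v + a 2%nat * v ^ 2 + a 3%nat * v ^ 3)) <= Ka * V ^ 4 * t ^ 4)%R).
  { assert (Ta := HTa v w ltac:(nra) Hva).
    unfold cubic_part in Ta. rewrite Ha0, Ha1, Cplus_0_l, Cmult_1_l in Ta.
    eapply Rle_trans; [exact Ta|]. rewrite Rmult_assoc. apply Rmult_le_compat_l; [exact HKa|].
    rewrite <- Rpow_mult_distr. apply pow_incr. split; [apply Cmod_ge_0 | exact Hvt]. }
  assert (Ht1 : (0 < t <= 1)%R) by lra.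
  assert (HbV : (Cmod (b 1%nat) + Cmod (b 2%nat) + Cmod (b 3%nat) <= V)%R) by (unfold V; lra).
  exact (compose_defect_bound _ _ _ _ _ v t V (Ka * V ^ 4) Kb Ht1 Hvt HbV Hvp HKb Hf).
Qed.

Lemma inverse_low_coefs :
  b 1%nat = 1 /\ b 2%nat = - a 2%nat /\ b 3%nat = 2 * a 2%nat ^ 2 - a 3%nat.
Proof.
  destruct inverse_compose_defect_small as [K [d [Hd Hsmall]]].
  destruct (cubic_eq_0_of_small _ _ _ K d Hd Hsmall) as [E1 [E2 E3]].
  assert (B1 : b 1%nat = 1) by (rewrite <- (Cplus_0_l 1), <- E1; ring).
  rewrite B1 in E2, E3.
  assert (B2 : b 2%nat = - a 2%nat) by (rewrite <- (Cplus_0_l (- a 2%nat)), <- E2; ring).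
  rewrite B2 in E3. split; [exact B1|]. split; [exact B2|].
  rewrite <- (Cplus_0_l (2 * a 2%nat ^ 2 - a 3%nat)), <- E3. ring.
Qed.

End LocalInverse.

(** * The coefficient estimates *)

Lemma in_class_coefficient_system (q : R) (eta : C) (mu lam : R) (E a : ps) :
  (0 < q < 1)%R -> E 1%nat <> 0 -> in_class q eta mu lam E a ->
  let x := qnat q 2 in let y := qnat q 3 in
  let M2 := (mu - (mu - 1) * x)%R in
  let M3 := (mu - (mu - 1) * y)%R in
  let N := (mu - (mu - 1) * x ^ 2)%R in
  let P := RtoC ((lam * y - 1) * M3) * Lq q eta 3 in
  let B := RtoC (lam * x ^ 2 * (lam * M2 ^ 2 - N) / 2) * Lq q eta 2 ^ 2 in
  exists c1 c2 d2,
    (Cmod c1 <= 1)%R /\ (Cmod c2 <= 1 - Cmod c1 ^ 2)%R /\ (Cmod d2 <= 1 - Cmod c1 ^ 2)%R /\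
    RtoC (lam * x * M2) * Lq q eta 2 * a 2%nat = E 1%nat * c1 /\
    P * a 3%nat + B * a 2%nat ^ 2 = E 1%nat * c2 + E 2%nat * c1 ^ 2 /\
    P * (2 * a 2%nat ^ 2 - a 3%nat) + B * a 2%nat ^ 2 = E 1%nat * d2 + E 2%nat * c1 ^ 2.
Proof.
  intros Hq HE1 [b [Hab [[h [hA [h0 [hD hE]]]] [k [kA [k0 [kD kE]]]]]]] x y M2 M3 N P B.
  destruct (inverse_low_coefs a b Hab) as [Hb1 [Hb2 Hb3]].
  assert (Ha1 : a 1%nat = 1) by apply Hab.
  destruct (Sexpr_low_coefs q mu lam (Jq q eta a) Hq Ha1) as [Sa1 Sa2].
  destruct (Sexpr_low_coefs q mu lam (Jq q eta b) Hq Hb1) as [Sb1 Sb2].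
  destruct (pscomp_low_coefs E h h0) as [Ca1 Ca2].
  destruct (pscomp_low_coefs E k k0) as [Cb1 Cb2].
  destruct (schur_coef_bounds h (conj hA (conj h0 hD))) as [Hh1 Hh2].
  destruct (schur_coef_bounds k (conj kA (conj k0 kD))) as [Hk1 Hk2].
  change (Jq q eta a 2%nat) with (Lq q eta 2 * a 2%nat) in Sa1, Sa2.
  change (Jq q eta a 3%nat) with (Lq q eta 3 * a 3%nat) in Sa2.
  change (Jq q eta b 2%nat) with (Lq q eta 2 * b 2%nat) in Sb1, Sb2.
  change (Jq q eta b 3%nat) with (Lq q eta 3 * b 3%nat) in Sb2.
  rewrite hE, Ca1 in Sa1. rewrite hE, Ca2 in Sa2.
  rewrite kE, Cb1, Hb2 in Sb1. rewrite kE, Cb2, Hb2, Hb3 in Sb2.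
  assert (Hk1c : k 1%nat = - h 1%nat).
  { assert (Z : E 1%nat * (k 1%nat + h 1%nat) = 0)
      by (rewrite Cmult_plus_distr_l, Sb1, Sa1; ring).
    apply Cmult_integral in Z as [Z|Z]; [contradiction|].
    rewrite <- (Cplus_0_l (- h 1%nat)), <- Z. ring. }
  rewrite Hk1c, Cmod_opp in Hk2.
  exists (h 1%nat), (h 2%nat), (k 2%nat).
  repeat split; try assumption.
  - rewrite Sa1. fold x y M2 M3 N. ring.
  - rewrite Sa2. fold x y M2 M3 N. unfold P, B. ring.
  - replace (E 2%nat * h 1%nat ^ 2) with (E 2%nat * k 1%nat ^ 2) by (rewrite Hk1c; ring).
    rewrite Sb2. fold x y M2 M3 N. unfold P, B. ring.
Qed.

Lemma Rle_div_of_mult_le (u v w : R) : (0 < w)%R -> (u * w <= v)%R -> (u <= v / w)%R.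
Proof.
  intros Hw H. apply Rmult_le_reg_r with w; [exact Hw|].
  unfold Rdiv. rewrite Rmult_assoc, Rinv_l by lra. lra.
Qed.

Lemma Rle_sqrt_of_sq_le (u v : R) : (0 <= u)%R -> (u ^ 2 <= v)%R -> (u <= sqrt v)%R.
Proof. intros Hu H. rewrite <- (sqrt_pow2 u Hu). apply sqrt_le_1_alt, H. Qed.

Section CoefficientEstimates.
Variables (lam x y M2 M3 N : R) (L2 L3 E1 E2 Om Th a2 a3 c1 c2 d2 : C).
Hypotheses (Hlam : (1 <= lam)%R) (Hx : (0 < x)%R) (Hy : (1 < y)%R)
  (HM2 : M2 <> 0%R) (HM3 : M3 <> 0%R) (HL2 : L2 <> 0) (HL3 : L3 <> 0)
  (HE1im : Im E1 = 0%R) (HE1re : (0 < Re E1)%R).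
Hypotheses (HOm : Om = 2 * RtoC (lam * y - 1) * RtoC M3 * L3
                       + RtoC lam * RtoC (lam * M2 ^ 2 - N) * RtoC (x ^ 2) * L2 ^ 2)
  (HTh : Th = 2 * RtoC (lam * y - 1) * RtoC M3 * E1 ^ 2 * L3
              + RtoC lam * (RtoC (lam * M2 ^ 2) * (E1 ^ 2 + 2 * E1 - 2 * E2)
                            - RtoC N * E1 ^ 2) * RtoC (x ^ 2) * L2 ^ 2)
  (HOm0 : Om <> 0) (HTh0 : Th <> 0).
Hypotheses (Hc1 : (Cmod c1 <= 1)%R) (Hc2 : (Cmod c2 <= 1 - Cmod c1 ^ 2)%R)
  (Hd2 : (Cmod d2 <= 1 - Cmod c1 ^ 2)%R)
  (Hlin : RtoC (lam * x * M2) * L2 * a2 = E1 * c1)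
  (Hquad : RtoC ((lam * y - 1) * M3) * L3 * a3
           + RtoC (lam * x ^ 2 * (lam * M2 ^ 2 - N) / 2) * L2 ^ 2 * a2 ^ 2
           = E1 * c2 + E2 * c1 ^ 2)
  (Hquad' : RtoC ((lam * y - 1) * M3) * L3 * (2 * a2 ^ 2 - a3)
            + RtoC (lam * x ^ 2 * (lam * M2 ^ 2 - N) / 2) * L2 ^ 2 * a2 ^ 2
            = E1 * d2 + E2 * c1 ^ 2).

Let e := Re E1.

Let HE1 : E1 = RtoC e.
Proof. destruct E1 as [u w]. unfold e, Re. simpl in *. subst w. reflexivity. Qed.

Let Hmod_E1 : Cmod E1 = e.
Proof. rewrite HE1, Cmod_R, Rabs_pos_eq; [reflexivity | unfold e; lra]. Qed.

Let Hc2' : (Cmod (c2 + c1 ^ 2) <= 1)%R.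
Proof. eapply Rle_trans; [apply Cmod_triangle|]. rewrite Cmod_pow. lra. Qed.

Let Hd2' : (Cmod (d2 + c1 ^ 2) <= 1)%R.
Proof. eapply Rle_trans; [apply Cmod_triangle|]. rewrite Cmod_pow. lra. Qed.

Lemma Omega_a2_sq :
  Om * a2 ^ 2 = E1 * (c2 + c1 ^ 2) + E1 * (d2 + c1 ^ 2) + 2 * (E2 - E1) * c1 ^ 2.
Proof.
  transitivity ((E1 * c2 + E2 * c1 ^ 2) + (E1 * d2 + E2 * c1 ^ 2)); [|ring].
  rewrite <- Hquad, <- Hquad', HOm.
  repeat rewrite ?RtoC_mult, ?RtoC_minus, ?RtoC_plus, ?RtoC_pow, ?RtoC_div by lra. field.
Qed.

Lemma Theta_a2_sq : Th * a2 ^ 2 = E1 ^ 3 * ((c2 + c1 ^ 2) + (d2 + c1 ^ 2)).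
Proof.
  transitivity (E1 ^ 2 * (Om * a2 ^ 2) - 2 * (E2 - E1) * (RtoC (lam * x * M2) * L2 * a2) ^ 2).
  - rewrite HTh, HOm. repeat rewrite ?RtoC_mult, ?RtoC_minus, ?RtoC_pow. ring.
  - rewrite Omega_a2_sq, Hlin. ring.
Qed.

Lemma a3_minus_a2_sq :
  2 * RtoC ((lam * y - 1) * M3) * L3 * (a3 - a2 ^ 2) = E1 * (c2 - d2).
Proof.
  transitivity ((E1 * c2 + E2 * c1 ^ 2) - (E1 * d2 + E2 * c1 ^ 2)); [|ring].
  rewrite <- Hquad, <- Hquad'. ring.
Qed.

Lemma a2_linear_bound : (Cmod a2 * (lam * Cmod (RtoC M2 * L2) * x) <= e)%R.
Proof.
  assert (T : Cmod (RtoC (lam * x * M2) * L2 * a2) = Cmod (E1 * c1)) by (rewrite Hlin; reflexivity).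
  rewrite !Cmod_mult, Hmod_E1, !Cmod_R, !Rabs_mult, (Rabs_pos_eq lam), (Rabs_pos_eq x) in T
    by lra.
  rewrite Cmod_mult, Cmod_R.
  assert (0 < e)%R by exact HE1re.
  nra.
Qed.

Lemma a2_Omega_bound : (Cmod Om * Cmod a2 ^ 2 <= 2 * (Cmod (E2 - E1) + e))%R.
Proof.
  rewrite <- Cmod_pow, <- Cmod_mult, Omega_a2_sq.
  eapply Rle_trans; [apply Cmod_triangle3|]. rewrite !Cmod_mult, Cmod_pow, Hmod_E1.
  replace (Cmod 2) with 2%R by (rewrite Cmod_R, Rabs_pos_eq; lra).
  assert (0 < e)%R by exact HE1re.
  assert (T := Cmod_ge_0 (E2 - E1)). assert (T1 := Cmod_ge_0 c1).
  assert (Cmod c1 ^ 2 <= 1)%R by (simpl; nra).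
  assert (e * Cmod (c2 + c1 ^ 2) <= e)%R by nra.
  assert (e * Cmod (d2 + c1 ^ 2) <= e)%R by nra.
  nra.
Qed.

Lemma a2_Theta_bound : (Cmod Th * Cmod a2 ^ 2 <= 2 * e ^ 3)%R.
Proof.
  rewrite <- Cmod_pow, <- Cmod_mult, Theta_a2_sq, Cmod_mult, Cmod_pow, Hmod_E1.
  assert (Cmod (c2 + c1 ^ 2 + (d2 + c1 ^ 2)) <= 2)%R
    by (eapply Rle_trans; [apply Cmod_triangle | lra]).
  assert (0 < e ^ 3)%R by (apply pow_lt; exact HE1re). nra.
Qed.

Lemma a3_minus_a2_sq_bound :
  (Cmod (a3 - a2 ^ 2) * ((lam * y - 1) * Cmod (RtoC M3 * L3)) <= e)%R.
Proof.
  assert (T : Cmod (2 * RtoC ((lam * y - 1) * M3) * L3 * (a3 - a2 ^ 2)) = Cmod (E1 * (c2 - d2)))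
    by (rewrite a3_minus_a2_sq; reflexivity).
  rewrite !Cmod_mult, Hmod_E1, !Cmod_R, Rabs_mult, (Rabs_pos_eq (lam * y - 1)),
    (Rabs_pos_eq 2) in T by nra.
  assert (Cmod (c2 - d2) <= 2)%R.
  { unfold Cminus. eapply Rle_trans; [apply Cmod_triangle|]. rewrite Cmod_opp. nra. }
  rewrite Cmod_mult, Cmod_R.
  assert (0 <= Cmod (a3 - a2 ^ 2) * ((lam * y - 1) * (Rabs M3 * Cmod L3)))%R.
  { assert (T1 := Cmod_ge_0 (a3 - a2 ^ 2)). assert (T2 := Rabs_pos M3).
    assert (T3 := Cmod_ge_0 L3). apply Rmult_le_pos; [exact T1|]. apply Rmult_le_pos; nra. }
  assert (0 < e)%R by exact HE1re. nra.
Qed.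

Lemma a2_bound :
  (Cmod a2 <= Rmin (Rmin (e / (lam * Cmod (RtoC M2 * L2) * x))
                         (sqrt (2 * (Cmod (E2 - E1) + e) / Cmod Om)))
                   (e * sqrt (2 * e) / sqrt (Cmod Th)))%R.
Proof.
  assert (He := HE1re). fold e in He.
  assert (HA := Cmod_ge_0 a2).
  assert (HOm' : (0 < Cmod Om)%R) by (apply Cmod_gt_0; exact HOm0).
  assert (HTh' : (0 < Cmod Th)%R) by (apply Cmod_gt_0; exact HTh0).
  assert (HML : (0 < Cmod (RtoC M2 * L2))%R).
  { apply Cmod_gt_0, Cmult_neq_0; [intro E; apply RtoC_inj in E |]; auto. }
  apply Rmin_glb; [apply Rmin_glb|].
  - apply Rle_div_of_mult_le; [|exact a2_linear_bound].
    apply Rmult_lt_0_compat; [apply Rmult_lt_0_compat|]; lra.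
  - apply Rle_sqrt_of_sq_le; [exact HA|].
    apply Rle_div_of_mult_le; [exact HOm'|]. rewrite Rmult_comm. exact a2_Omega_bound.
  - apply Rle_div_of_mult_le; [apply sqrt_lt_R0; exact HTh'|].
    apply Rsqr_incr_0_var; [|apply Rmult_le_pos; [lra | apply sqrt_pos]].
    rewrite !Rsqr_mult, !Rsqr_sqrt by lra.
    assert (T := a2_Theta_bound). unfold Rsqr. simpl in T. nra.
Qed.

Lemma a3_bound :
  (Cmod a3 <= e / ((lam * y - 1) * Cmod (RtoC M3 * L3))
     + Rmin (e ^ 2 / (lam ^ 2 * M2 ^ 2 * x ^ 2 * Cmod L2 ^ 2))
            (2 * (Cmod (E2 - E1) + e) / Cmod Om))%R.
Proof.
  assert (He := HE1re). fold e in He.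
  assert (HA := Cmod_ge_0 a2).
  assert (HOm' : (0 < Cmod Om)%R) by (apply Cmod_gt_0; exact HOm0).
  assert (HML2 : (0 < Cmod (RtoC M2 * L2))%R).
  { apply Cmod_gt_0, Cmult_neq_0; [intro E; apply RtoC_inj in E |]; auto. }
  assert (HML3 : (0 < Cmod (RtoC M3 * L3))%R).
  { apply Cmod_gt_0, Cmult_neq_0; [intro E; apply RtoC_inj in E |]; auto. }
  set (D1 := (lam * Cmod (RtoC M2 * L2) * x)%R).
  assert (HD1 : (0 < D1)%R) by (unfold D1; apply Rmult_lt_0_compat; [apply Rmult_lt_0_compat|]; lra).
  assert (T := Cmod_triangle (a3 - a2 ^ 2) (a2 ^ 2)).
  replace (a3 - a2 ^ 2 + a2 ^ 2) with a3 in T by ring. rewrite Cmod_pow in T.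
  assert (T1 : (Cmod (a3 - a2 ^ 2) <= e / ((lam * y - 1) * Cmod (RtoC M3 * L3)))%R).
  { apply Rle_div_of_mult_le; [apply Rmult_lt_0_compat; nra | exact a3_minus_a2_sq_bound]. }
  assert (T2 : (Cmod a2 ^ 2 <= Rmin (e ^ 2 / (lam ^ 2 * M2 ^ 2 * x ^ 2 * Cmod L2 ^ 2))
                                  (2 * (Cmod (E2 - E1) + e) / Cmod Om))%R).
  { apply Rmin_glb.
    - replace (lam ^ 2 * M2 ^ 2 * x ^ 2 * Cmod L2 ^ 2)%R with (D1 ^ 2)%R
        by (unfold D1; rewrite Cmod_mult, Cmod_R, <- (pow2_abs M2); ring).
      apply Rle_div_of_mult_le; [apply pow_lt; exact HD1|].
      rewrite <- Rpow_mult_distr. apply pow_incr. split; [|exact a2_linear_bound].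
      apply Rmult_le_pos; lra.
    - apply Rle_div_of_mult_le; [exact HOm'|]. rewrite Rmult_comm. exact a2_Omega_bound. }
  lra.
Qed.

End CoefficientEstimates.

Theorem theorem2 (q : R) (eta : C) (mu lam : R) (E a : nat -> C) :
  (0 < q < 1)%R -> (-1 < Re eta)%R -> (0 <= mu)%R -> (1 <= lam)%R ->
  analytic_disk E ->
  (forall z v, inDisk z -> is_pseries E z v -> (0 < Re v)%R) ->
  E 0%nat = 1 -> Im (E 1%nat) = 0%R -> (0 < Re (E 1%nat))%R ->
  let M2 := (mu - (mu - 1) * qnat q 2)%R in
  let M3 := (mu - (mu - 1) * qnat q 3)%R in
  let N := (mu - (mu - 1) * qnat q 2 ^ 2)%R in
  let L2 := Lq q eta 2 in
  let L3 := Lq q eta 3 in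
  let E1 := E 1%nat in
  let E2 := E 2%nat in
  let Om := 2 * RtoC (lam * qnat q 3 - 1) * RtoC M3 * L3
            + RtoC lam * RtoC (lam * M2 ^ 2 - N) * RtoC (qnat q 2 ^ 2) * L2 ^ 2 in
  let Th := 2 * RtoC (lam * qnat q 3 - 1) * RtoC M3 * E1 ^ 2 * L3
            + RtoC lam * (RtoC (lam * M2 ^ 2) * (E1 ^ 2 + 2 * E1 - 2 * E2)
                          - RtoC N * E1 ^ 2) * RtoC (qnat q 2 ^ 2) * L2 ^ 2 in
  M2 <> 0%R -> M3 <> 0%R -> Om <> 0 -> Th <> 0 ->
  in_class q eta mu lam E a ->
  (Cmod (a 2%nat) <=
     Rmin (Rmin (Re E1 / (lam * Cmod (RtoC M2 * L2) * qnat q 2))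
                (sqrt (2 * (Cmod (E2 - E1) + Re E1) / Cmod Om)))
          (Re E1 * sqrt (2 * Re E1) / sqrt (Cmod Th)))%R /\
  (Cmod (a 3%nat) <=
     Re E1 / ((lam * qnat q 3 - 1) * Cmod (RtoC M3 * L3))
     + Rmin (Re E1 ^ 2 / (lam ^ 2 * M2 ^ 2 * qnat q 2 ^ 2 * Cmod L2 ^ 2))
            (2 * (Cmod (E2 - E1) + Re E1) / Cmod Om))%R.
Proof.
  intros Hq Heta _ Hlam _ _ _ HE1im HE1re M2 M3 N L2 L3 E1 E2 Om Th HM2 HM3 HOm HTh Hclass.
  assert (HE1 : E1 <> 0) by (intro H; unfold E1 in H; rewrite H in HE1re; simpl in HE1re; lra).
  destruct (in_class_coefficient_system q eta mu lam E a Hq HE1 Hclass)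
    as (c1 & c2 & d2 & Hc1 & Hc2 & Hd2 & Hlin & Hquad & Hquad').
  assert (HL2 : L2 <> 0) by (apply Lq_neq_0; auto).
  assert (HL3 : L3 <> 0) by (apply Lq_neq_0; auto).
  assert (Hx := qnat_2_pos q Hq). assert (Hy := qnat_3_gt_1 q Hq).
  split; [eapply a2_bound with (a3 := a 3%nat) (c2 := c2) (d2 := d2)
         | eapply a3_bound with (c2 := c2) (d2 := d2)]; solve [eassumption | reflexivity].
Qed.
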